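(* Let $s\ge1$ and $m\ge2$, and let $\Omega_m^1=\frac2\pi\sum_{k=1}^{m-1}\frac1{2k+1}$. For a trigonometric polynomial $h(w)=\sum_{n\ge0}b_n\overline w^n$ (finitely many $b_n\in\mathbb R$ nonzero), $$L_\Omega h(w):=\frac{d}{dt}\Big|_{t=0}F_1(\Omega,th)(w)=\frac{\Omega b_0}{2}i(w-\overline w)+\frac i2\sum_{n\ge1}(n+1)\big(\Omega-\Omega_{n+1}^1\big)b_n\big(w^{n+1}-\overline w^{n+1}\big).$$ Moreover: (1) for every $\Omega\in\mathbb R$, $L_\Omega$ extends to a continuous operator $L_\Omega:B^s(\mathbb T)\to B^{s-1}_{\mathrm{Log}}(\mathbb T)$; (2) the kernel of $L_\Omega$ on $B^s(\mathbb T)$ is non-trivial if and only if $\Omega\in\mathcal S_1=\{\Omega_m^1:m\ge2\}$, and for $\Omega=\Omega_m^1$ it is one-dimensional, generated by $v_m(w)=\overline w^{m-1}$; (3) the range of $L_{\Omega_m^1}$ is closed in $B^{s-1}_{\mathrm{Log}}(\mathbb T)$, of co-dimension one, and equals $\{g\in B^{s-1}_{\mathrm{Log}}(\mathbb T): g(w)=i\sum_{n\ge1,n\ne m}g_n(w^n-\overline w^n),\ g_n\in\mathbb R\}$; (4) (transversality) $\partial_\Omega L_\Omega v_m\big|_{\Omega=\Omega_m^1}\notin R(L_{\Omega_m^1})$, where $\partial_\Omega L_\Omega h(w)=\operatorname{Im}\{\overline{h'(w)}+\overline w h(w)\}$.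
   Context: This concerns the SQG case $\alpha=1$. $\mathbb T$ unit circle; $\int_{\mathbb T}\dots d\tau$ complex line integral; $\phi'=d\phi/dw$. The modified boundary functional is $G_1(\Omega,\phi)(w)=\operatorname{Im}\Big\{\Big(\Omega\phi(w)-\frac{1}{2\pi i}\int_{\mathbb T}\frac{\tau\phi'(\tau)-w\phi'(w)}{|\phi(w)-\phi(\tau)|}\frac{d\tau}{\tau}\Big)\frac{\overline{\phi'(w)}}{w}\Big\}$, $w\in\mathbb T$, and $F_1(\Omega,f)(w)=G_1(\Omega,w+f(w))$. Spaces: $B^s(\mathbb T)=\{f(w)=\sum_{n\ge0}b_n\overline w^n: b_n\in\mathbb R,\ \|f\|_{B^s}=|b_0|+\sum_{n\ge1}n^s|b_n|<\infty\}$ and $B^{s}_{\mathrm{Log}}(\mathbb T)=\{g(w)=i\sum_{n\ge1}g_n(w^n-\overline w^n): g_n\in\mathbb R,\ \|g\|_{B^s_{\mathrm{Log}}}=\sum_{n\ge1}\frac{n^s}{1+\ln n}|g_n|<\infty\}$. For $n\ge2$, $\Omega_n^1=\frac2\pi\sum_{k=1}^{n-1}\frac1{2k+1}$. *)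

From Stdlib Require Import Reals Lra Lia ClassicalEpsilon.
Open Scope R_scope.

Record C : Type := Cmk { Cre : R ; Cim : R }.

Definition CR (x : R) : C := Cmk x 0.
Definition Ci : C := Cmk 0 1.
Definition Cadd (z u : C) : C := Cmk (Cre z + Cre u) (Cim z + Cim u).
Definition Copp (z : C) : C := Cmk (- Cre z) (- Cim z).
Definition Csub (z u : C) : C := Cadd z (Copp u).
Definition Cmul (z u : C) : C :=
  Cmk (Cre z * Cre u - Cim z * Cim u) (Cre z * Cim u + Cim z * Cre u).
Definition Cscal (r : R) (z : C) : C := Cmk (r * Cre z) (r * Cim z).
Definition Cconj (z : C) : C := Cmk (Cre z) (- Cim z).
Definition Cnorm (z : C) : R := sqrt (Cre z * Cre z + Cim z * Cim z).
Definition Cinv (z : C) : C :=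
  let d := Cre z * Cre z + Cim z * Cim z in Cmk (Cre z / d) (- Cim z / d).
Definition Cdiv (z u : C) : C := Cmul z (Cinv u).
Fixpoint Cpow (z : C) (n : nat) : C :=
  match n with O => CR 1 | S k => Cmul z (Cpow z k) end.
Definition Cexpi (th : R) : C := Cmk (cos th) (sin th).
Fixpoint Csum (f : nat -> C) (N : nat) : C :=
  match N with O => f O | S k => Cadd (Csum f k) (f (S k)) end.

(* Riemann integral of a real function (value when it exists; arbitrary otherwise) *)
Definition RInt (f : R -> R) (a b : R) : R :=
  epsilon (inhabits 0)
    (fun l => exists pr : Riemann_integrable f a b, RiemannInt pr = l).
(* complex line integral over the unit circle (counterclockwise):
   int_T g(tau) dtau = int_0^{2pi} g(e^{i a}) i e^{i a} da *)
Definition Tint (g : C -> C) : C :=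
  let F := fun a => Cmul (g (Cexpi a)) (Cmul Ci (Cexpi a)) in
  Cmk (RInt (fun a => Cre (F a)) 0 (2 * PI)) (RInt (fun a => Cim (F a)) 0 (2 * PI)).

(* phi and its complex derivative dphi are given as functions on T *)
Definition G1 (Om : R) (phi dphi : C -> C) (w : C) : R :=
  let integrand := fun tau =>
    Cdiv (Cscal (/ Cnorm (Csub (phi w) (phi tau)))
                (Csub (Cmul tau (dphi tau)) (Cmul w (dphi w))))
         tau in
  let I := Cdiv (Tint integrand) (Cmul (CR (2 * PI)) Ci) in
  Cim (Cmul (Csub (Cscal Om (phi w)) I) (Cdiv (Cconj (dphi w)) w)).

Definition tp_eval (N : nat) (b : nat -> R) (w : C) : C :=
  Csum (fun n => Cscal (b n) (Cpow (Cconj w) n)) N.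
(* its complex derivative h'(w) = sum_{n=0}^N (-n) b_n w^{-n-1},
   written on T where w^{-1} = wbar *)
Definition tp_deriv (N : nat) (b : nat -> R) (w : C) : C :=
  Csum (fun n => Cscal (- INR n * b n) (Cpow (Cconj w) (S n))) N.

Definition F1 (Om : R) (N : nat) (b : nat -> R) (th : R) : R :=
  G1 Om (fun tau => Cadd tau (tp_eval N b tau))
        (fun tau => Cadd (CR 1) (tp_deriv N b tau)) (Cexpi th).

Fixpoint osum (n : nat) : R :=
  match n with O => 0 | S k => osum k + / (2 * INR (S k) + 1) end.
Definition Omega1 (m : nat) : R := 2 / PI * osum (m - 1).

Definition Lformula (Om : R) (N : nat) (b : nat -> R) (w : C) : C :=
  Cadd (Cscal (Om * b O / 2) (Cmul Ci (Csub w (Cconj w))))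
       (Cscal (1 / 2)
          (Csum (fun n => match n with
                  | O => CR 0
                  | S _ => Cscal (INR (S n) * (Om - Omega1 (S n)) * b n)
                             (Cmul Ci (Csub (Cpow w (S n)) (Cpow (Cconj w) (S n))))
                  end) N)).

(* f = sum_{n>=0} b_n wbar^n  in B^s  <->  b : nat -> R *)
Definition Bs_term (s : R) (b : nat -> R) (n : nat) : R :=
  match n with O => Rabs (b O) | S _ => Rpower (INR n) s * Rabs (b n) end.
(* g = i sum_{n>=1} g_n (w^n - wbar^n) in B^s_Log <-> g : nat -> R with g 0 = 0 *)
Definition BLog_term (s : R) (g : nat -> R) (n : nat) : R :=
  match n with O => 0 | S _ => Rpower (INR n) s / (1 + ln (INR n)) * Rabs (g n) end.

Definition in_Bs (s : R) (b : nat -> R) : Prop :=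
  exists l, infinite_sum (Bs_term s b) l.
Definition in_BLog (s : R) (g : nat -> R) : Prop :=
  g O = 0 /\ exists l, infinite_sum (BLog_term s g) l.

Definition series_val (u : nat -> R) : R :=
  epsilon (inhabits 0) (fun l => infinite_sum u l).
Definition Bs_norm (s : R) (b : nat -> R) : R := series_val (Bs_term s b).
Definition BLog_norm (s : R) (g : nat -> R) : R := series_val (BLog_term s g).

Definition L_coef (Om : R) (b : nat -> R) (n : nat) : R :=
  match n with
  | O => 0
  | S O => Om * b O / 2
  | S n' => INR n * (Om - Omega1 n) * b n' / 2
  end.

Definition vm (m : nat) (n : nat) : R := if Nat.eqb n (m - 1) then 1 else 0.

Definition RangeL (s : R) (m : nat) (g : nat -> R) : Prop :=
  exists b, in_Bs s b /\ forall n, L_coef (Omega1 m) b n = g n.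

Definition Cseries_to (u : nat -> C) (z : C) : Prop :=
  infinite_sum (fun n => Cre (u n)) (Cre z) /\ infinite_sum (fun n => Cim (u n)) (Cim z).

(* Write [w = e^{i th}] and [tau = e^{i (th + u)}].  Every difference of a quantity taken at
   [w] and at [tau] (the points themselves, [h], [tau h'(tau)]) is [2 sin (u/2)] times a
   trigonometric polynomial in [u/2]; after cancelling this factor the integrand of [G_1]
   becomes a smooth function of [u], uniformly for small [t], and a second-order expansion in
   [t] justifies differentiating under the integral.  The [t]-derivative integrates to sums of
   [int_0^{2 PI} e^{+-i (2k+1) u/2} du = +-4i/(2k+1)], which produce the harmonic sums behind
   [Omega_n^1].  Hence [L_Om] is diagonal: it multiplies [b_{n-1}] by [n (Om - Omega_n^1) / 2].
   Since [Omega_n^1] is strictly increasing and grows like [ln n / PI], this factor is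
   [O(n ln n)], which gives continuity into [B^{s-1}_Log]; at [Om = Omega_m^1] it vanishes only
   for [n = m], and [|Omega_m^1 - Omega_n^1| >= c (1 + ln n)] for [n <> m], so [L] is boundedly
   invertible on the other modes.  This gives the kernel, the closed range of codimension one,
   and transversality, since [d/dOm L_Om v_m = (m/2) (w^m - wbar^m) i] is not in the range. *)

From Stdlib Require Import ZArith Reals Lra Lia Psatz ClassicalEpsilon FunctionalExtensionality.
From Coquelicot Require Import Coquelicot.
From Pilot Require Import Defs.
Open Scope R_scope.

Lemma C_ext (z u : C) : Cre z = Cre u -> Cim z = Cim u -> z = u.
Proof. destruct z, u; simpl; intros -> ->; reflexivity. Qed.

Lemma C_ring : ring_theory (CR 0) (CR 1) Cadd Cmul Csub Copp (@eq C).
Proof.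
  constructor; intros; apply C_ext; destruct x; try destruct y; try destruct z;
  simpl; ring.
Qed.
Add Ring C_ring_inst : C_ring.

Lemma Cscal_CR r z : Cscal r z = Cmul (CR r) z.
Proof. apply C_ext; simpl; ring. Qed.

Lemma Copp_involutive z : Copp (Copp z) = z.
Proof. ring. Qed.

Lemma Cnorm_scal c v : Cnorm (Cscal c v) = Rabs c * Cnorm v.
Proof.
  unfold Cnorm; simpl.
  replace (c * Cre v * (c * Cre v) + c * Cim v * (c * Cim v))
    with (Rsqr c * (Cre v * Cre v + Cim v * Cim v)) by (unfold Rsqr; ring).
  rewrite sqrt_mult_alt by apply Rle_0_sqr. rewrite sqrt_Rsqr_abs. reflexivity.
Qed.

Lemma Cexpi_add a b : Cmul (Cexpi a) (Cexpi b) = Cexpi (a + b).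
Proof. apply C_ext; simpl; rewrite ?cos_plus, ?sin_plus; ring. Qed.

Lemma Cexpi_0 : Cexpi 0 = CR 1.
Proof. apply C_ext; simpl; rewrite ?cos_0, ?sin_0; ring. Qed.

Lemma Cexpi_2PI a : Cexpi (a + 2 * PI) = Cexpi a.
Proof. apply C_ext; simpl; rewrite ?cos_plus, ?sin_plus, cos_2PI, sin_2PI; ring. Qed.

Lemma Cconj_expi a : Cconj (Cexpi a) = Cexpi (- a).
Proof. apply C_ext; simpl; rewrite ?cos_neg, ?sin_neg; ring. Qed.

Lemma Cinv_expi a : Cinv (Cexpi a) = Cexpi (- a).
Proof.
  apply C_ext; simpl; rewrite ?cos_neg, ?sin_neg;
  replace (cos a * cos a + sin a * sin a) with 1
    by (rewrite <- (sin2_cos2 a); unfold Rsqr; ring);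
  field.
Qed.

Lemma Cpow_expi a n : Cpow (Cexpi a) n = Cexpi (INR n * a).
Proof.
  induction n as [|n IH]; simpl Cpow.
  - rewrite Rmult_0_l, Cexpi_0; reflexivity.
  - rewrite IH, Cexpi_add, S_INR; f_equal; ring.
Qed.

Lemma Cpow_conj_expi a n : Cpow (Cconj (Cexpi a)) n = Cexpi (- (INR n * a)).
Proof. rewrite Cconj_expi, Cpow_expi; f_equal; ring. Qed.

Lemma Csum_ext f g N : (forall n, (n <= N)%nat -> f n = g n) -> Csum f N = Csum g N.
Proof.
  induction N as [|N IH]; intros H; simpl.
  - apply H; lia.
  - rewrite IH by (intros; apply H; lia). rewrite H by lia. reflexivity.
Qed.

Lemma Csum_mul_l c f N : Csum (fun n => Cmul c (f n)) N = Cmul c (Csum f N).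
Proof. induction N; simpl; [reflexivity|rewrite IHN; ring]. Qed.

Lemma Csum_opp f N : Csum (fun n => Copp (f n)) N = Copp (Csum f N).
Proof. induction N; simpl; [reflexivity|rewrite IHN; ring]. Qed.

Lemma Csum_sub f g N : Csum (fun n => Csub (f n) (g n)) N = Csub (Csum f N) (Csum g N).
Proof. induction N; simpl; [reflexivity|rewrite IHN; unfold Csub; ring]. Qed.

Lemma Csum_conj f N : Csum (fun n => Cconj (f n)) N = Cconj (Csum f N).
Proof. induction N; simpl; [reflexivity|rewrite IHN; apply C_ext; simpl; ring]. Qed.

Lemma Csum_lin3 (f g h : nat -> C) N (a b c : C) :
  Cadd (Cmul a (Csum f N)) (Cadd (Cmul b (Csum g N)) (Cmul c (Csum h N))) =
  Csum (fun n => Cadd (Cmul a (f n)) (Cadd (Cmul b (g n)) (Cmul c (h n)))) N.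
Proof. induction N; simpl; [reflexivity|rewrite <- IHN; ring]. Qed.

Lemma Cre_Csum f N : Cre (Csum f N) = sum_f_R0 (fun n => Cre (f n)) N.
Proof. induction N; simpl; [reflexivity|rewrite IHN; reflexivity]. Qed.

Lemma Cim_Csum f N : Cim (Csum f N) = sum_f_R0 (fun n => Cim (f n)) N.
Proof. induction N; simpl; [reflexivity|rewrite IHN; reflexivity]. Qed.

Lemma Csum_single f N : (forall n, (n < N)%nat -> f n = CR 0) -> Csum f N = f N.
Proof.
  intros H. destruct N as [|N]; [reflexivity|]. simpl.
  assert (Hzero : forall k, (k <= N)%nat -> Csum f k = CR 0).
  { induction k as [|k IH]; intros Hk; simpl.
    - apply H; lia.
    - rewrite IH, H by lia. apply C_ext; simpl; ring. }
  rewrite Hzero by lia. apply C_ext; simpl; ring.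
Qed.

Lemma tp_eval_scal N b t z :
  tp_eval N (fun n => t * b n) z = Cscal t (tp_eval N b z).
Proof.
  unfold tp_eval. rewrite Cscal_CR, <- Csum_mul_l. apply Csum_ext; intros.
  rewrite !Cscal_CR. apply C_ext; simpl; ring.
Qed.

Lemma tp_deriv_scal N b t z :
  tp_deriv N (fun n => t * b n) z = Cscal t (tp_deriv N b z).
Proof.
  unfold tp_deriv. rewrite Cscal_CR, <- Csum_mul_l. apply Csum_ext; intros.
  rewrite !Cscal_CR. apply C_ext; simpl; ring.
Qed.

Lemma tp_eval_expi N b a :
  tp_eval N b (Cexpi a) = Csum (fun n => Cscal (b n) (Cexpi (- (INR n * a)))) N.
Proof. unfold tp_eval. apply Csum_ext; intros. rewrite Cpow_conj_expi; reflexivity. Qed.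

Lemma tp_deriv_expi N b a :
  tp_deriv N b (Cexpi a) = Csum (fun n => Cscal (- INR n * b n) (Cexpi (- (INR (S n) * a)))) N.
Proof. unfold tp_deriv. apply Csum_ext; intros. rewrite Cpow_conj_expi; reflexivity. Qed.

Lemma Cexpi_mul_tp_deriv N b a :
  Cmul (Cexpi a) (tp_deriv N b (Cexpi a)) =
  Csum (fun n => Cscal (- INR n * b n) (Cexpi (- (INR n * a)))) N.
Proof.
  rewrite tp_deriv_expi, <- Csum_mul_l. apply Csum_ext; intros n _.
  rewrite !Cscal_CR.
  transitivity (Cmul (CR (- INR n * b n)) (Cmul (Cexpi a) (Cexpi (- (INR (S n) * a))))).
  - ring.
  - rewrite Cexpi_add, S_INR. do 2 f_equal. ring.
Qed.

(** * Integrals over the circle *)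

Definition CInt (f : R -> C) (a b : R) (v : C) : Prop :=
  is_RInt (fun u => Cre (f u)) a b (Cre v) /\ is_RInt (fun u => Cim (f u)) a b (Cim v).

Lemma is_RInt_lin (f g h : R -> R) a b lf lg l (p q : R) :
  is_RInt f a b lf -> is_RInt g a b lg ->
  (forall u, h u = p * f u + q * g u) -> l = p * lf + q * lg -> is_RInt h a b l.
Proof.
  intros Hf Hg Hh ->. apply is_RInt_ext with (fun u => p * f u + q * g u).
  - intros; rewrite Hh; reflexivity.
  - apply (is_RInt_plus (fun u => p * f u) (fun u => q * g u)).
    + exact (is_RInt_scal f a b p lf Hf).
    + exact (is_RInt_scal g a b q lg Hg).
Qed.

Lemma CInt_ext f g a b v : (forall u, f u = g u) -> CInt f a b v -> CInt g a b v.
Proof.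
  intros H [H1 H2]; split; (eapply is_RInt_ext; [|eassumption]);
    intros; simpl; rewrite H; reflexivity.
Qed.

Lemma CInt_const a b : CInt (fun _ => CR 0) a b (CR 0).
Proof.
  generalize (is_RInt_const a b 0).
  unfold scal; simpl; unfold mult; simpl; rewrite Rmult_0_r; intros H.
  split; exact H.
Qed.

Lemma CInt_add f g a b vf vg : CInt f a b vf -> CInt g a b vg ->
  CInt (fun u => Cadd (f u) (g u)) a b (Cadd vf vg).
Proof.
  intros [F1 F2] [G1 G2]; split; simpl.
  - apply (is_RInt_lin _ _ _ _ _ _ _ _ 1 1 F1 G1); intros; simpl; ring.
  - apply (is_RInt_lin _ _ _ _ _ _ _ _ 1 1 F2 G2); intros; simpl; ring.
Qed.

Lemma CInt_mul_l c f a b v : CInt f a b v ->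
  CInt (fun u => Cmul c (f u)) a b (Cmul c v).
Proof.
  intros [F1 F2]; split; simpl.
  - apply (is_RInt_lin _ _ _ _ _ _ _ _ (Cre c) (- Cim c) F1 F2); intros; simpl; ring.
  - apply (is_RInt_lin _ _ _ _ _ _ _ _ (Cre c) (Cim c) F2 F1); intros; simpl; ring.
Qed.

Lemma CInt_scal r f a b v : CInt f a b v ->
  CInt (fun u => Cscal r (f u)) a b (Cscal r v).
Proof.
  intros H. rewrite Cscal_CR. eapply CInt_ext; [|apply (CInt_mul_l (CR r)), H].
  intros; rewrite Cscal_CR; reflexivity.
Qed.

Lemma CInt_opp f a b v : CInt f a b v -> CInt (fun u => Copp (f u)) a b (Copp v).
Proof.
  intros H. replace (Copp v) with (Cmul (Copp (CR 1)) v) by ring.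
  eapply CInt_ext; [|apply (CInt_mul_l (Copp (CR 1))), H]. intros; cbv beta; ring.
Qed.

Lemma CInt_Csum (f : nat -> R -> C) (v : nat -> C) a b N :
  (forall n, CInt (f n) a b (v n)) ->
  CInt (fun u => Csum (fun n => f n u) N) a b (Csum v N).
Proof.
  intros H; induction N; simpl; [apply H|].
  apply CInt_add; [apply IHN|apply H].
Qed.

Lemma is_RInt_eq (f : R -> R) a b l l' : is_RInt f a b l -> l = l' -> is_RInt f a b l'.
Proof. intros H <-; exact H. Qed.

Lemma CInt_expi_half c : c <> 0 -> sin (c * PI) = 0 -> cos (c * PI) = -1 ->
  CInt (fun u => Cexpi (c * u / 2)) 0 (2 * PI) (Cmk 0 (4 / c)).
Proof.
  intros Hc Hs Hco.
  assert (Hend : c * (2 * PI) / 2 = c * PI /\ c * 0 / 2 = 0) by (split; field).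
  split; simpl.
  - eapply is_RInt_eq.
    + apply (is_RInt_derive (fun u => 2 / c * sin (c * u / 2))); intros x _.
      * auto_derive; [exact I|]. unfold Rdiv. field. exact Hc.
      * apply (ex_derive_continuous (V := R_NormedModule)). auto_derive. exact I.
    + unfold minus, plus, opp; simpl. destruct Hend as [-> ->]. rewrite Hs, sin_0. ring.
  - eapply is_RInt_eq.
    + apply (is_RInt_derive (fun u => - (2 / c) * cos (c * u / 2))); intros x _.
      * auto_derive; [exact I|]. unfold Rdiv. field. exact Hc.
      * apply (ex_derive_continuous (V := R_NormedModule)). auto_derive. exact I.
    + unfold minus, plus, opp; simpl. destruct Hend as [-> ->]. rewrite Hco, cos_0.
      field. exact Hc.
Qed.

Lemma sin_odd_PI k : sin ((2 * INR k + 1) * PI) = 0.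
Proof.
  replace ((2 * INR k + 1) * PI) with (PI + 2 * INR k * PI) by ring.
  rewrite sin_period; apply sin_PI.
Qed.

Lemma cos_odd_PI k : cos ((2 * INR k + 1) * PI) = -1.
Proof.
  replace ((2 * INR k + 1) * PI) with (PI + 2 * INR k * PI) by ring.
  rewrite cos_period; apply cos_PI.
Qed.

Lemma odd_pos k : 0 < 2 * INR k + 1.
Proof. pose proof (pos_INR k); lra. Qed.

Fixpoint oddexp_neg (n : nat) (u : R) : C :=
  match n with
  | O => CR 0
  | S k => Cadd (oddexp_neg k u) (Cexpi (- (2 * INR k + 1) * u / 2))
  end.

Fixpoint oddexp_pos (n : nat) (u : R) : C :=
  match n with
  | O => CR 0
  | S k => Cadd (oddexp_pos k u) (Cexpi ((2 * INR k + 3) * u / 2))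
  end.

Fixpoint odd_harmonic (n : nat) : R :=
  match n with O => 0 | S k => odd_harmonic k + / (2 * INR k + 1) end.

Lemma odd_harmonic_osum n : odd_harmonic n = osum n + 2 * INR n / (2 * INR n + 1).
Proof.
  induction n as [|n IH].
  - simpl. field.
  - cbn [odd_harmonic osum]. rewrite IH, S_INR. pose proof (pos_INR n). field. split; lra.
Qed.

Lemma CInt_oddexp_neg n : CInt (oddexp_neg n) 0 (2 * PI) (Cmk 0 (- 4 * odd_harmonic n)).
Proof.
  induction n as [|k IH]; simpl.
  - replace (Cmk 0 (- 4 * 0)) with (CR 0) by (apply C_ext; simpl; ring). apply CInt_const.
  - replace (Cmk 0 (- 4 * (odd_harmonic k + / (2 * INR k + 1))))
      with (Cadd (Cmk 0 (-4 * odd_harmonic k)) (Cmk 0 (4 / (- (2 * INR k + 1)))))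
      by (pose proof (odd_pos k); apply C_ext; simpl; field; lra).
    apply CInt_add; [exact IH|]. pose proof (odd_pos k).
    apply CInt_expi_half; [lra| |];
      replace (- (2 * INR k + 1) * PI) with (- ((2 * INR k + 1) * PI)) by ring.
    + rewrite sin_neg, sin_odd_PI; ring.
    + rewrite cos_neg, cos_odd_PI; ring.
Qed.

Lemma CInt_oddexp_pos n : CInt (oddexp_pos n) 0 (2 * PI) (Cmk 0 (4 * osum n)).
Proof.
  induction n as [|k IH]; cbn [oddexp_pos osum].
  - replace (Cmk 0 (4 * 0)) with (CR 0) by (apply C_ext; simpl; ring). apply CInt_const.
  - replace (Cmk 0 (4 * (osum k + / (2 * INR (S k) + 1))))
      with (Cadd (Cmk 0 (4 * osum k)) (Cmk 0 (4 / (2 * INR (S k) + 1))))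
      by (pose proof (odd_pos (S k)); apply C_ext; cbn [Cre Cim Cadd]; field; lra).
    apply CInt_add; [exact IH|].
    replace (2 * INR k + 3) with (2 * INR (S k) + 1) by (rewrite S_INR; ring).
    apply CInt_expi_half.
    + pose proof (odd_pos (S k)); lra.
    + apply sin_odd_PI.
    + apply cos_odd_PI.
Qed.

(** * Regularisation of the kernel of [G1] *)

Lemma Cexpi_neg_sub1 u :
  Csub (Cexpi (- u)) (CR 1) = Cmul (Cmk 0 (-2 * sin (u / 2))) (Cexpi (- u / 2)).
Proof.
  replace (- u) with (- (2 * (u / 2))) by field.
  replace (- (2 * (u / 2)) / 2) with (- (u / 2)) by field.
  apply C_ext; simpl; rewrite ?cos_neg, ?sin_neg, ?cos_2a_sin, ?sin_2a; ring.
Qed.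

Lemma Cexpi_neg_mul_sub1 n u :
  Csub (Cexpi (- (INR n * u))) (CR 1) = Cmul (Cmk 0 (-2 * sin (u / 2))) (oddexp_neg n u).
Proof.
  induction n as [|k IH]; simpl oddexp_neg.
  - simpl INR. apply C_ext; simpl; rewrite ?Rmult_0_l, ?Ropp_0, ?cos_0, ?sin_0; ring.
  - replace (Cexpi (- (INR (S k) * u))) with (Cmul (Cexpi (- (INR k * u))) (Cexpi (- u)))
      by (rewrite Cexpi_add, S_INR; f_equal; ring).
    transitivity (Cadd (Csub (Cexpi (- (INR k * u))) (CR 1))
                       (Cmul (Cexpi (- (INR k * u))) (Csub (Cexpi (- u)) (CR 1))));
      [unfold Csub; ring|].
    rewrite IH, Cexpi_neg_sub1.
    replace (Cexpi (- (2 * INR k + 1) * u / 2))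
      with (Cmul (Cexpi (- (INR k * u))) (Cexpi (- u / 2)))
      by (rewrite Cexpi_add; f_equal; field).
    ring.
Qed.

Lemma Cexpi_mul_conj_oddexp_neg n u : Cmul (Cexpi u) (Cconj (oddexp_neg n u)) = oddexp_pos n u.
Proof.
  induction n as [|k IH]; simpl oddexp_neg; simpl oddexp_pos.
  - apply C_ext; simpl; ring.
  - rewrite <- IH.
    replace (Cconj (Cadd (oddexp_neg k u) (Cexpi (- (2 * INR k + 1) * u / 2))))
      with (Cadd (Cconj (oddexp_neg k u)) (Cexpi ((2 * INR k + 1) * u / 2)))
      by (replace (- (2 * INR k + 1) * u / 2) with (- ((2 * INR k + 1) * u / 2)) by field;
          apply C_ext; cbn [Cre Cim Cadd Cconj Cexpi]; rewrite ?cos_neg, ?sin_neg; ring).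
    replace (Cexpi ((2 * INR k + 3) * u / 2)) with (Cmul (Cexpi u) (Cexpi ((2 * INR k + 1) * u / 2)))
      by (rewrite Cexpi_add; f_equal; field).
    ring.
Qed.

(* For [w = e^{i th}] and [tau = e^{i (th + u)}], every difference of a quantity at [w] and
   at [tau] is [2 sin (u/2)] times a smooth function of [u]; [chord_unit], [chord_tp] and
   [chord_tpd] are these quotients for [tau], [h(tau)] and [tau h'(tau)]. *)
Definition chord_unit (th u : R) : C := Cmul (Cmk 0 (-1)) (Cexpi (th + u / 2)).

Section Chord.
Variables (N : nat) (b : nat -> R) (th : R).

Definition chord_tp (u : R) : C :=
  Cmul Ci (Csum (fun n => Cscal (b n) (Cmul (Cexpi (- (INR n * th))) (oddexp_neg n u))) N).

Definition chord_tpd (u : R) : C :=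
  Cmul Ci (Csum (fun n => Cscal (INR n * b n) (Cmul (Cexpi (- (INR n * th))) (oddexp_neg n u))) N).

Lemma chord_unit_norm u :
  Cre (chord_unit th u) * Cre (chord_unit th u) + Cim (chord_unit th u) * Cim (chord_unit th u) = 1.
Proof. unfold chord_unit; simpl. rewrite <- (sin2_cos2 (th + u / 2)); unfold Rsqr; ring. Qed.

Lemma Cexpi_chord u :
  Csub (Cexpi th) (Cexpi (th + u)) = Cscal (2 * sin (u / 2)) (chord_unit th u).
Proof.
  unfold chord_unit. set (v := th + u / 2). set (r := u / 2).
  replace th with (v - r) by (unfold v, r; field).
  replace (v - r + u) with (v + r) by (unfold v, r; field).
  apply C_ext; simpl; rewrite ?cos_plus, ?cos_minus, ?sin_plus, ?sin_minus; ring.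
Qed.

Lemma Cexpi_neg_chord n u :
  Csub (Cexpi (- (INR n * th))) (Cexpi (- (INR n * (th + u)))) =
  Cscal (2 * sin (u / 2)) (Cmul Ci (Cmul (Cexpi (- (INR n * th))) (oddexp_neg n u))).
Proof.
  replace (Cexpi (- (INR n * (th + u))))
    with (Cmul (Cexpi (- (INR n * th))) (Cexpi (- (INR n * u))))
    by (rewrite Cexpi_add; f_equal; ring).
  transitivity (Cmul (Copp (Cexpi (- (INR n * th)))) (Csub (Cexpi (- (INR n * u))) (CR 1)));
    [unfold Csub; ring|].
  rewrite Cexpi_neg_mul_sub1, Cscal_CR.
  replace (Cmk 0 (-2 * sin (u / 2))) with (Copp (Cmul (CR (2 * sin (u / 2))) Ci))
    by (apply C_ext; simpl; ring).
  ring.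
Qed.

Lemma tp_eval_chord u :
  Csub (tp_eval N b (Cexpi th)) (tp_eval N b (Cexpi (th + u)))
  = Cscal (2 * sin (u / 2)) (chord_tp u).
Proof.
  rewrite !tp_eval_expi, <- Csum_sub. unfold chord_tp.
  rewrite Cscal_CR, <- !Csum_mul_l. apply Csum_ext; intros n _.
  transitivity (Cscal (b n) (Csub (Cexpi (- (INR n * th))) (Cexpi (- (INR n * (th + u)))))).
  - rewrite !Cscal_CR. unfold Csub. ring.
  - rewrite Cexpi_neg_chord, !Cscal_CR. ring.
Qed.

Lemma tp_deriv_chord u :
  Csub (Cmul (Cexpi (th + u)) (tp_deriv N b (Cexpi (th + u))))
       (Cmul (Cexpi th) (tp_deriv N b (Cexpi th)))
  = Cscal (2 * sin (u / 2)) (chord_tpd u).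
Proof.
  rewrite !Cexpi_mul_tp_deriv, <- Csum_sub. unfold chord_tpd.
  rewrite Cscal_CR, <- !Csum_mul_l. apply Csum_ext; intros n _.
  transitivity (Cscal (INR n * b n)
                  (Csub (Cexpi (- (INR n * th))) (Cexpi (- (INR n * (th + u)))))).
  - rewrite !Cscal_CR. unfold Csub. apply C_ext; simpl; ring.
  - rewrite Cexpi_neg_chord, !Cscal_CR. ring.
Qed.

Definition curve (t : R) (tau : C) : C := Cadd tau (tp_eval N (fun n => t * b n) tau).
Definition dcurve (t : R) (tau : C) : C := Cadd (CR 1) (tp_deriv N (fun n => t * b n) tau).

Definition F1_integrand (t a : R) : C :=
  Cmul (Cdiv (Cscal (/ Cnorm (Csub (curve t (Cexpi th)) (curve t (Cexpi a))))
                    (Csub (Cmul (Cexpi a) (dcurve t (Cexpi a)))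
                          (Cmul (Cexpi th) (dcurve t (Cexpi th)))))
              (Cexpi a))
       (Cmul Ci (Cexpi a)).

Definition regular_integrand (t u : R) : C :=
  Cmul Ci (Cscal (/ Cnorm (Cadd (chord_unit th u) (Cscal t (chord_tp u))))
                 (Cadd (Copp (chord_unit th u)) (Cscal t (chord_tpd u)))).

Lemma F1_integrand_2PI t a : F1_integrand t (a + 2 * PI) = F1_integrand t a.
Proof. unfold F1_integrand. rewrite Cexpi_2PI. reflexivity. Qed.

(* The factor [2 sin (u/2) > 0] cancels between the numerator and the norm. *)
Lemma F1_integrand_regular t u : 0 < u < 2 * PI ->
  F1_integrand t (th + u) = regular_integrand t u.
Proof.
  intros Hu. assert (Hs : 0 < sin (u / 2)) by (apply sin_gt_0; lra).
  unfold F1_integrand, regular_integrand, curve, dcurve.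
  rewrite !tp_eval_scal, !tp_deriv_scal.
  set (w := Cexpi th). set (tau := Cexpi (th + u)).
  replace (Csub (Cadd w (Cscal t (tp_eval N b w))) (Cadd tau (Cscal t (tp_eval N b tau))))
    with (Cadd (Csub w tau) (Cscal t (Csub (tp_eval N b w) (tp_eval N b tau))))
    by (rewrite !Cscal_CR; unfold Csub; ring).
  replace (Csub (Cmul tau (Cadd (CR 1) (Cscal t (tp_deriv N b tau))))
                (Cmul w (Cadd (CR 1) (Cscal t (tp_deriv N b w)))))
    with (Cadd (Copp (Csub w tau))
               (Cscal t (Csub (Cmul tau (tp_deriv N b tau)) (Cmul w (tp_deriv N b w)))))
    by (rewrite !Cscal_CR; unfold Csub; ring).
  unfold w, tau. rewrite Cexpi_chord, tp_eval_chord, tp_deriv_chord.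
  set (c := 2 * sin (u / 2)). set (x := chord_unit th u).
  replace (Cadd (Cscal c x) (Cscal t (Cscal c (chord_tp u))))
    with (Cscal c (Cadd x (Cscal t (chord_tp u)))) by (rewrite !Cscal_CR; ring).
  replace (Cadd (Copp (Cscal c x)) (Cscal t (Cscal c (chord_tpd u))))
    with (Cscal c (Cadd (Copp x) (Cscal t (chord_tpd u)))) by (rewrite !Cscal_CR; ring).
  rewrite Cnorm_scal, Rabs_right by (unfold c; lra).
  set (V := Cadd (Copp x) (Cscal t (chord_tpd u))).
  set (nn := Cnorm (Cadd x (Cscal t (chord_tp u)))).
  replace (Cscal (/ (c * nn)) (Cscal c V)) with (Cscal (/ nn) V).
  2: { assert (Hc : c <> 0) by (unfold c; lra). clearbody V nn. rewrite Rinv_mult.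
       rewrite !Cscal_CR. transitivity (Cmul (CR (/ nn)) (Cmul (CR (/ c * c)) V)).
       - rewrite Rinv_l by exact Hc. ring.
       - apply C_ext; simpl; ring. }
  unfold Cdiv. rewrite Cinv_expi.
  transitivity (Cmul Ci (Cmul (Cscal (/ nn) V) (Cmul (Cexpi (- (th + u))) (Cexpi (th + u)))));
    [ring|].
  rewrite Cexpi_add, Rplus_opp_l, Cexpi_0. ring.
Qed.

End Chord.

(** * Differentiation under the integral *)

Definition Ccontinuous (f : R -> C) : Prop :=
  forall u, continuity_pt (fun v => Cre (f v)) u /\ continuity_pt (fun v => Cim (f v)) u.

Definition Cbounded (f : R -> C) : Prop :=
  exists K, forall u, Rabs (Cre (f u)) <= K /\ Rabs (Cim (f u)) <= K.

Definition Ccont_bounded (f : R -> C) : Prop := Ccontinuous f /\ Cbounded f.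

Lemma Ccontinuous_ext f g : (forall u, f u = g u) -> Ccontinuous f -> Ccontinuous g.
Proof.
  intros E H u; destruct (H u) as [A1 A2]; split;
    [eapply continuity_pt_ext; [|exact A1]|eapply continuity_pt_ext; [|exact A2]];
    intros; simpl; rewrite E; reflexivity.
Qed.

Lemma Ccontinuous_scal_fun (r : R -> R) V : (forall u, continuity_pt r u) -> Ccontinuous V ->
  Ccontinuous (fun u => Cscal (r u) (V u)).
Proof.
  intros Hr H u; destruct (H u) as [A1 A2]; simpl; split;
    apply continuity_pt_mult; auto.
Qed.

Lemma Ccontinuous_Cnorm W : Ccontinuous W -> forall u, continuity_pt (fun v => Cnorm (W v)) u.
Proof.
  intros H u; destruct (H u) as [A1 A2]. unfold Cnorm.
  apply (continuity_pt_comp (fun v => Cre (W v) * Cre (W v) + Cim (W v) * Cim (W v)) sqrt).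
  - apply continuity_pt_plus; apply continuity_pt_mult; assumption.
  - apply continuity_pt_sqrt. nra.
Qed.

Lemma Ccont_bounded_const c : Ccont_bounded (fun _ => c).
Proof.
  split.
  - intros u; split; apply continuity_pt_const; intros ? ?; reflexivity.
  - exists (Rabs (Cre c) + Rabs (Cim c)); intros; split;
      pose proof (Rabs_pos (Cre c)); pose proof (Rabs_pos (Cim c)); lra.
Qed.

Lemma Ccont_bounded_add f g : Ccont_bounded f -> Ccont_bounded g ->
  Ccont_bounded (fun u => Cadd (f u) (g u)).
Proof.
  intros [Cf [Kf Bf]] [Cg [Kg Bg]]; split.
  - intros u; destruct (Cf u), (Cg u); simpl; split; apply continuity_pt_plus; assumption.
  - exists (Kf + Kg); intros u; destruct (Bf u), (Bg u); simpl; split;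
      eapply Rle_trans; try apply Rabs_triang; lra.
Qed.

Lemma Rabs_mult_le a b c d : Rabs a <= c -> Rabs b <= d -> Rabs (a * b) <= c * d.
Proof. intros H1 H2. rewrite Rabs_mult. apply Rmult_le_compat; auto using Rabs_pos. Qed.

Lemma Ccont_bounded_mul f g : Ccont_bounded f -> Ccont_bounded g ->
  Ccont_bounded (fun u => Cmul (f u) (g u)).
Proof.
  intros [Cf [Kf Bf]] [Cg [Kg Bg]]; split.
  - intros u; destruct (Cf u), (Cg u); simpl; split;
      [apply continuity_pt_minus|apply continuity_pt_plus]; apply continuity_pt_mult; assumption.
  - exists (2 * (Kf * Kg)); intros u; destruct (Bf u) as [A1 A2], (Bg u) as [B1 B2]; simpl.
    pose proof (Rabs_mult_le _ _ _ _ A1 B1); pose proof (Rabs_mult_le _ _ _ _ A2 B2).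
    pose proof (Rabs_mult_le _ _ _ _ A1 B2); pose proof (Rabs_mult_le _ _ _ _ A2 B1).
    split; unfold Rminus; eapply Rle_trans; try apply Rabs_triang; rewrite ?Rabs_Ropp; lra.
Qed.

Lemma Ccont_bounded_scal r f : Ccont_bounded f -> Ccont_bounded (fun u => Cscal r (f u)).
Proof.
  intros H. destruct (Ccont_bounded_mul _ _ (Ccont_bounded_const (CR r)) H) as [C1 [K B]].
  split.
  - eapply Ccontinuous_ext; [|exact C1]. intros; rewrite Cscal_CR; reflexivity.
  - exists K; intros u; rewrite Cscal_CR; apply B.
Qed.

Lemma Ccont_bounded_expi g : (forall u, continuity_pt g u) -> Ccont_bounded (fun u => Cexpi (g u)).
Proof.
  intros Hg; split.
  - intros u; simpl; split.
    + apply (continuity_pt_comp g cos); [apply Hg|apply continuity_cos].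
    + apply (continuity_pt_comp g sin); [apply Hg|apply continuity_sin].
  - exists 1; intros; simpl; split; apply Rabs_le;
      [pose proof (COS_bound (g u))|pose proof (SIN_bound (g u))]; lra.
Qed.

Lemma Ccont_bounded_Csum (f : nat -> R -> C) N : (forall n, Ccont_bounded (f n)) ->
  Ccont_bounded (fun u => Csum (fun n => f n u) N).
Proof.
  intros H; induction N; simpl; [apply H|]. apply Ccont_bounded_add; [apply IHN|apply H].
Qed.

Lemma Ccont_bounded_oddexp_neg n : Ccont_bounded (oddexp_neg n).
Proof.
  induction n as [|k IH]; simpl.
  - apply Ccont_bounded_const.
  - apply (Ccont_bounded_add (oddexp_neg k) (fun u => Cexpi (- (2 * INR k + 1) * u / 2)));
      [exact IH|].
    apply Ccont_bounded_expi; intros; reg.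
Qed.

Lemma Ccont_bounded_chord_unit th : Ccont_bounded (chord_unit th).
Proof.
  apply (Ccont_bounded_mul (fun _ => Cmk 0 (-1)) (fun u => Cexpi (th + u / 2))).
  - apply Ccont_bounded_const.
  - apply Ccont_bounded_expi; intros; reg.
Qed.

Lemma Ccont_bounded_chord_sum (c : nat -> R) N th :
  Ccont_bounded (fun u => Cmul Ci
    (Csum (fun n => Cscal (c n) (Cmul (Cexpi (- (INR n * th))) (oddexp_neg n u))) N)).
Proof.
  apply (Ccont_bounded_mul (fun _ => Ci)); [apply Ccont_bounded_const|].
  apply (Ccont_bounded_Csum (fun n u => Cscal (c n) (Cmul (Cexpi (- (INR n * th))) (oddexp_neg n u)))).
  intros n. apply Ccont_bounded_scal.
  apply (Ccont_bounded_mul (fun _ => Cexpi (- (INR n * th))));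
    [apply Ccont_bounded_const|apply Ccont_bounded_oddexp_neg].
Qed.

Lemma Ccont_bounded_chord_tp N b th : Ccont_bounded (chord_tp N b th).
Proof. apply Ccont_bounded_chord_sum. Qed.

Lemma Ccont_bounded_chord_tpd N b th : Ccont_bounded (chord_tpd N b th).
Proof. apply (Ccont_bounded_chord_sum (fun n => INR n * b n)). Qed.

Lemma inv_sqrt_expansion v : Rabs v <= 5 / 8 ->
  Rabs (/ sqrt (1 + v) - 1) <= 2 * Rabs v /\
  Rabs (/ sqrt (1 + v) - 1 + v / 2) <= 4 * (v * v).
Proof.
  intros Hv. apply Rabs_le_between in Hv as [Hva Hvb].
  set (S := sqrt (1 + v)).
  assert (HS2 : S * S = 1 + v) by (unfold S; apply sqrt_sqrt; lra).
  assert (HS0 : 0 <= S) by (unfold S; apply sqrt_pos).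
  assert (HSlo : 1 / 2 <= S) by nra.
  assert (HShi : S <= 2) by nra.
  split.
  - assert (Hbeta : (/ S - 1) * S * (1 + S) = - v) by (field_simplify; [nra|lra]).
    destruct (Rle_dec 0 (/ S - 1)).
    + rewrite Rabs_right by lra. rewrite Rabs_left1 by nra. nra.
    + rewrite Rabs_left by lra.
      destruct (Rle_dec 0 v); [rewrite Rabs_right by lra|]; nra.
  - assert (Hgam : (/ S - 1 + v / 2) * (2 * S) = (S - 1) * (S - 1) * (S + 2))
      by (field_simplify; [nra|lra]).
    assert (HS1 : (S - 1) * (S - 1) * (1 + S) * (1 + S) = v * v) by nra.
    assert (0 <= (S - 1) * (S - 1)) by nra.
    assert ((S - 1) * (S - 1) <= v * v) by nra.
    apply Rabs_le. split; nra.
Qed.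

Lemma perturbed_unit_norm2_bound (x1 x2 z1 z2 K T : R) :
  x1 * x1 + x2 * x2 = 1 -> Rabs z1 <= K -> Rabs z2 <= K -> 0 <= K -> 0 <= T -> K * T <= / 8 ->
  forall t, Rabs t = T ->
  Rabs (2 * t * (x1 * z1 + x2 * z2) + t * t * (z1 * z1 + z2 * z2)) <= 5 * K * T.
Proof.
  intros Hx Hz1 Hz2 HK HT0 HKT t <-.
  assert (Hx1 : Rabs x1 <= 1) by (apply Rabs_le; nra).
  assert (Hx2 : Rabs x2 <= 1) by (apply Rabs_le; nra).
  assert (Hrho : Rabs (x1 * z1 + x2 * z2) <= 2 * K).
  { eapply Rle_trans; [apply Rabs_triang|].
    pose proof (Rabs_mult_le _ _ _ _ Hx1 Hz1); pose proof (Rabs_mult_le _ _ _ _ Hx2 Hz2). lra. }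
  assert (Hzz : 0 <= z1 * z1 + z2 * z2 <= 2 * K * K).
  { apply Rabs_le_between in Hz1; apply Rabs_le_between in Hz2. split; nra. }
  eapply Rle_trans; [apply Rabs_triang|].
  rewrite !Rabs_mult, (Rabs_right 2), (Rabs_right (z1 * z1 + z2 * z2)) by lra.
  assert (Rabs t * Rabs (x1 * z1 + x2 * z2) <= Rabs t * (2 * K))
    by (apply Rmult_le_compat_l; auto).
  assert (Rabs t * Rabs t * (z1 * z1 + z2 * z2) <= Rabs t * Rabs t * (2 * K * K))
    by (apply Rmult_le_compat_l; nra).
  assert (K * Rabs t * (K * Rabs t) <= K * Rabs t * / 8) by (apply Rmult_le_compat_l; nra).
  nra.
Qed.

Lemma inv_norm_expansion (x1 x2 z1 z2 xi yi K t : R) :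
  x1 * x1 + x2 * x2 = 1 -> Rabs xi <= 1 -> Rabs yi <= K -> Rabs z1 <= K -> Rabs z2 <= K ->
  0 <= K -> Rabs t <= / (8 * (K + 1)) ->
  1 / 4 <= (x1 + t * z1) * (x1 + t * z1) + (x2 + t * z2) * (x2 + t * z2) /\
  Rabs (/ sqrt ((x1 + t * z1) * (x1 + t * z1) + (x2 + t * z2) * (x2 + t * z2))
          * (- xi + t * yi) - (- xi) - t * (yi + xi * (x1 * z1 + x2 * z2)))
    <= 120 * (K + 1) ^ 2 * t ^ 2.
Proof.
  intros Hx Hxi Hyi Hz1 Hz2 HK Ht.
  set (T := Rabs t).
  assert (HT0 : 0 <= T) by apply Rabs_pos.
  assert (Htt : t * t = T * T) by (unfold T; rewrite <- Rabs_mult, Rabs_right; [reflexivity|nra]).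
  assert (HKT : K * T <= / 8).
  { apply Rle_trans with (K * / (8 * (K + 1))); [apply Rmult_le_compat_l; auto|].
    apply Rmult_le_reg_r with (8 * (K + 1)); [lra|].
    rewrite Rmult_assoc, Rinv_l by lra. lra. }
  pose proof (perturbed_unit_norm2_bound x1 x2 z1 z2 K T Hx Hz1 Hz2 HK HT0 HKT t eq_refl) as Hv.
  set (rho := x1 * z1 + x2 * z2) in *. set (zz := z1 * z1 + z2 * z2) in *.
  assert (Hzz : 0 <= zz <= 2 * K * K).
  { unfold zz. apply Rabs_le_between in Hz1; apply Rabs_le_between in Hz2. split; nra. }
  set (v := 2 * t * rho + t * t * zz) in *.
  assert (HQ : (x1 + t * z1) * (x1 + t * z1) + (x2 + t * z2) * (x2 + t * z2) = 1 + v)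
    by (unfold v, rho, zz; nra).
  assert (Hv58 : Rabs v <= 5 / 8) by nra.
  destruct (inv_sqrt_expansion v Hv58) as [Hbeta Hgam].
  rewrite HQ. split; [apply Rabs_le_between in Hv58; lra|].
  set (a := / sqrt (1 + v)) in *.
  replace (a * (- xi + t * yi) - - xi - t * (yi + xi * rho))
    with (- xi * ((a - 1 + v / 2) - t * t * zz / 2) + t * yi * (a - 1)) by (unfold v; field).
  assert (Hvv : v * v <= 25 * (K * K) * (T * T)).
  { replace (v * v) with (Rabs v * Rabs v)
      by (rewrite <- Rabs_mult; apply Rabs_right; nra).
    pose proof (Rabs_pos v); nra. }
  assert (Ha : Rabs ((a - 1 + v / 2) - t * t * zz / 2) <= 101 * (K * K) * (T * T)).
  { replace ((a - 1 + v / 2) - t * t * zz / 2) with ((a - 1 + v / 2) + - (t * t * zz / 2))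
      by ring.
    eapply Rle_trans; [apply Rabs_triang|]. rewrite Rabs_Ropp.
    rewrite (Rabs_right (t * t * zz / 2)) by (apply Rle_ge; unfold Rdiv; apply Rmult_le_pos; nra).
    rewrite Htt.
    assert (T * T * zz <= T * T * (2 * K * K)) by (apply Rmult_le_compat_l; nra).
    lra. }
  eapply Rle_trans; [apply Rabs_triang|]. rewrite !Rabs_mult, Rabs_Ropp. fold T.
  pose proof (Rabs_pos xi); pose proof (Rabs_pos yi);
  pose proof (Rabs_pos (a - 1)); pose proof (Rabs_pos ((a - 1 + v / 2) - t * t * zz / 2)).
  assert (Rabs (a - 1) <= 10 * K * T) by lra.
  assert (T * Rabs yi <= T * K) by (apply Rmult_le_compat_l; auto).
  replace (t ^ 2) with (T * T) by (rewrite <- Htt; ring).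
  nra.
Qed.

Lemma derivable_pt_lim_of_quadratic_remainder (A : R -> R) I0 I1 t0 M :
  0 < t0 -> (forall t, Rabs t < t0 -> Rabs (A t - I0 - t * I1) <= M * (t * t)) ->
  A 0 = I0 /\ derivable_pt_lim A 0 I1.
Proof.
  intros Ht0 Hrem.
  assert (HM : 0 <= M).
  { assert (H := Hrem (t0 / 2)). rewrite Rabs_right in H by lra.
    specialize (H ltac:(lra)). pose proof (Rabs_pos (A (t0 / 2) - I0 - t0 / 2 * I1)).
    destruct (Rle_dec 0 M) as [|HMn]; auto.
    assert (M * (t0 / 2 * (t0 / 2)) < 0) by (apply Rmult_neg_pos; nra). lra. }
  assert (A0 : A 0 = I0).
  { assert (H := Hrem 0). rewrite Rabs_R0, !Rmult_0_l, Rmult_0_r in H.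
    specialize (H Ht0). apply Rabs_le_between in H. lra. }
  split; [exact A0|].
  intros eps Heps.
  assert (Hd : 0 < Rmin t0 (eps / (M + 1)))
    by (apply Rmin_glb_lt; [lra|apply Rdiv_lt_0_compat; lra]).
  exists (mkposreal _ Hd). intros h Hh Hhd. simpl in Hhd.
  assert (Hh1 : Rabs h < t0) by (eapply Rlt_le_trans; [exact Hhd|apply Rmin_l]).
  assert (Hh2 : Rabs h * (M + 1) < eps).
  { apply (Rmult_lt_reg_r (/ (M + 1))); [apply Rinv_0_lt_compat; lra|].
    rewrite Rmult_assoc, Rinv_r, Rmult_1_r by lra.
    eapply Rlt_le_trans; [exact Hhd|apply Rmin_r]. }
  specialize (Hrem h Hh1).
  rewrite Rplus_0_l, A0.
  replace ((A h - I0) / h - I1) with ((A h - I0 - h * I1) / h) by (field; exact Hh).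
  unfold Rdiv. rewrite Rabs_mult, Rabs_inv.
  assert (Hpos : 0 < Rabs h) by (apply Rabs_pos_lt; exact Hh).
  apply Rmult_lt_reg_r with (Rabs h); [exact Hpos|].
  rewrite Rmult_assoc, Rinv_l by lra. rewrite Rmult_1_r.
  assert (Rabs h * Rabs h = h * h) by (rewrite <- Rabs_mult, Rabs_right; [reflexivity|nra]).
  nra.
Qed.

Lemma derivable_pt_lim_param_RInt (F : R -> R -> R) (A : R -> R) (g0 g1 : R -> R)
    a b I0 I1 t0 M :
  a <= b -> 0 < t0 ->
  (forall t, Rabs t < t0 -> is_RInt (F t) a b (A t)) ->
  is_RInt g0 a b I0 -> is_RInt g1 a b I1 ->
  (forall t u, Rabs t < t0 -> a <= u <= b -> Rabs (F t u - g0 u - t * g1 u) <= M * (t * t)) ->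
  A 0 = I0 /\ derivable_pt_lim A 0 I1.
Proof.
  intros Hab Ht0 HF Hg0 Hg1 Hb.
  apply (derivable_pt_lim_of_quadratic_remainder A I0 I1 t0 ((b - a) * M) Ht0).
  intros t Ht.
  assert (H : is_RInt (fun u => F t u - g0 u - t * g1 u) a b (A t - I0 - t * I1)).
  { apply (is_RInt_lin (fun u => F t u - g0 u) g1 _ a b (A t - I0) I1 _ 1 (-t)); auto.
    - apply (is_RInt_lin (F t) g0 _ a b (A t) I0 _ 1 (-1)); auto; intros; ring.
    - intros; ring.
    - ring. }
  rewrite <- (is_RInt_unique _ _ _ _ H), Rmult_assoc.
  apply abs_RInt_le_const; [exact Hab|eexists; exact H|].
  intros u Hu; apply Hb; auto.
Qed.

Lemma RInt_of_is_RInt (f : R -> R) a b v : is_RInt f a b v -> Defs.RInt f a b = v.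
Proof.
  intros H.
  assert (pr : Riemann_integrable f a b) by (apply ex_RInt_Reals_0; exists v; exact H).
  assert (E : RiemannInt pr = v).
  { rewrite <- (RInt_Reals f a b pr). apply is_RInt_unique; exact H. }
  unfold Defs.RInt.
  destruct (epsilon_spec (inhabits 0)
              (fun l => exists pr : Riemann_integrable f a b, RiemannInt pr = l))
    as [pr' E'].
  - exists v, pr; exact E.
  - rewrite <- E', <- E. apply RiemannInt_P5.
Qed.

Lemma is_RInt_shift (h : R -> R) c d v l :
  is_RInt h (c + v) (d + v) l -> is_RInt (fun y => h (y + v)) c d l.
Proof.
  intros H.
  assert (H' := is_RInt_comp_lin h 1 v c d l).
  rewrite !Rmult_1_l in H'. specialize (H' H).
  apply is_RInt_ext with (2 := H'). intros x _. unfold scal; simpl; unfold mult; simpl.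
  rewrite !Rmult_1_l; reflexivity.
Qed.

Section Periodic.
Variable f : R -> R.
Hypothesis f_2PI : forall a, f (a + 2 * PI) = f a.

Lemma periodic_2PI_Z z a : f (a + 2 * IZR z * PI) = f a.
Proof.
  assert (Hn : forall k a, f (a + 2 * INR k * PI) = f a).
  { induction k as [|k IH]; intros a'.
    - simpl. rewrite Rmult_0_r, Rmult_0_l, Rplus_0_r. reflexivity.
    - rewrite S_INR. replace (a' + 2 * (INR k + 1) * PI) with ((a' + 2 * INR k * PI) + 2 * PI)
        by ring.
      rewrite f_2PI, IH. reflexivity. }
  destruct (Z.le_gt_cases 0 z) as [H|H].
  - destruct (Z_of_nat_complete z H) as [k ->]. rewrite <- INR_IZR_INZ. apply Hn.
  - destruct (Z_of_nat_complete (- z) ltac:(lia)) as [k Hk].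
    replace z with (- Z.of_nat k)%Z by lia.
    rewrite opp_IZR, <- INR_IZR_INZ, <- (Hn k (a + 2 * - INR k * PI)). f_equal; ring.
Qed.

Lemma is_RInt_periodic_shift_0_2PI th L : 0 <= th <= 2 * PI ->
  is_RInt (fun u => f (th + u)) 0 (2 * PI) L -> is_RInt f 0 (2 * PI) L.
Proof.
  intros Hth H0. pose proof PI_RGT_0.
  assert (H1 : is_RInt f th (th + 2 * PI) L).
  { apply is_RInt_ext with (fun y => f (th + (y + - th))); [intros; f_equal; ring|].
    apply (is_RInt_shift (fun u => f (th + u))).
    replace (th + - th) with 0 by ring. replace (th + 2 * PI + - th) with (2 * PI) by ring.
    exact H0. }
  assert (E1 : ex_RInt f th (2 * PI))
    by (apply (ex_RInt_Chasles_1 (V := R_CompleteNormedModule)) with (th + 2 * PI);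
        [lra|exists L; exact H1]).
  assert (E2 : ex_RInt f (2 * PI) (th + 2 * PI))
    by (apply (ex_RInt_Chasles_2 (V := R_CompleteNormedModule)) with th;
        [lra|exists L; exact H1]).
  destruct E1 as [l2 H2], E2 as [l1 H3].
  assert (H4 : is_RInt f 0 th l1).
  { apply is_RInt_ext with (fun y => f (y + 2 * PI)); [intros; apply f_2PI|].
    apply is_RInt_shift. rewrite Rplus_0_l. exact H3. }
  assert (H6 := is_RInt_Chasles f th (2 * PI) (th + 2 * PI) l2 l1 H2 H3).
  assert (E : plus l2 l1 = L).
  { rewrite <- (is_RInt_unique _ _ _ _ H6). apply is_RInt_unique; exact H1. }
  eapply is_RInt_eq; [exact (is_RInt_Chasles f 0 th (2 * PI) l1 l2 H4 H2)|].
  rewrite <- E. unfold plus; simpl. ring.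
Qed.

Lemma is_RInt_periodic_shift th L :
  is_RInt (fun u => f (th + u)) 0 (2 * PI) L -> is_RInt f 0 (2 * PI) L.
Proof.
  intros H. pose proof PI_RGT_0.
  set (z := Int_part (th / (2 * PI))).
  set (th0 := th + 2 * IZR (- z) * PI).
  assert (Hz := base_Int_part (th / (2 * PI))). fold z in Hz.
  assert (Hth0 : 0 <= th0 <= 2 * PI).
  { unfold th0. rewrite opp_IZR.
    assert (IZR z * (2 * PI) <= th)
      by (apply (Rmult_le_reg_r (/ (2 * PI))); [apply Rinv_0_lt_compat; lra|];
          rewrite Rmult_assoc, Rinv_r, Rmult_1_r by lra; lra).
    assert (th < (IZR z + 1) * (2 * PI))
      by (apply (Rmult_lt_reg_r (/ (2 * PI))); [apply Rinv_0_lt_compat; lra|];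
          rewrite Rmult_assoc, Rinv_r, Rmult_1_r by lra; lra).
    lra. }
  apply (is_RInt_periodic_shift_0_2PI th0 L Hth0).
  apply is_RInt_ext with (2 := H). intros u _.
  unfold th0. replace (th + 2 * IZR (- z) * PI + u) with ((th + u) + 2 * IZR (- z) * PI) by ring.
  symmetry; apply periodic_2PI_Z.
Qed.

End Periodic.

Lemma Cmul_Re_conj_unit (x z : C) : Cre x * Cre x + Cim x * Cim x = 1 ->
  Cmul x (CR (Cre (Cmul (Cconj x) z))) = Cscal (/ 2) (Cadd z (Cmul (Cmul x x) (Cconj z))).
Proof.
  destruct x as [x1 x2], z as [z1 z2]; simpl; intros H.
  apply C_ext; simpl.
  - assert (E : x1 * (x1 * z1 - - x2 * z2) - 0 * 0
                - / 2 * (z1 + ((x1 * x1 - x2 * x2) * z1 - (x1 * x2 + x2 * x1) * - z2))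
                = / 2 * z1 * (x1 * x1 + x2 * x2 - 1)) by field.
    rewrite H in E. lra.
  - assert (E : x1 * 0 + x2 * (x1 * z1 - - x2 * z2)
                - / 2 * (z2 + ((x1 * x1 - x2 * x2) * - z2 + (x1 * x2 + x2 * x1) * z1))
                = / 2 * z2 * (x1 * x1 + x2 * x2 - 1)) by field.
    rewrite H in E. lra.
Qed.

Definition kernel0 (th u : R) : C := Cmul Ci (Copp (chord_unit th u)).

Lemma CInt_kernel0 th : CInt (kernel0 th) 0 (2 * PI) (Cmul (Copp (Cexpi th)) (Cmk 0 4)).
Proof.
  apply (CInt_ext (fun u => Cmul (Copp (Cexpi th)) (Cexpi (1 * u / 2)))).
  - intros u. unfold kernel0, chord_unit.
    replace (Cexpi (th + u / 2)) with (Cmul (Cexpi th) (Cexpi (1 * u / 2)))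
      by (rewrite Cexpi_add; f_equal; field).
    symmetry; apply C_ext; simpl; ring.
  - apply CInt_mul_l. replace (Cmk 0 4) with (Cmk 0 (4 / 1)) by (f_equal; field).
    apply CInt_expi_half; rewrite ?Rmult_1_l; [lra|apply sin_PI|apply cos_PI].
Qed.

Section Kernel1.
Variables (N : nat) (b : nat -> R) (th : R).

(* The [t]-derivative at [t = 0] of [regular_integrand N b th t u]. *)
Definition kernel1 (u : R) : C :=
  Cmul Ci (Cadd (chord_tpd N b th u)
                (Cmul (chord_unit th u)
                      (CR (Cre (Cmul (Cconj (chord_unit th u)) (chord_tp N b th u)))))).

Definition kernel1_oddexp (u : R) : C :=
  Copp (Csum (fun n => Cscal (b n)
     (Cadd (Cscal (INR n + / 2) (Cmul (Cexpi (- (INR n * th))) (oddexp_neg n u)))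
           (Cscal (/ 2) (Cmul (Cexpi ((INR n + 2) * th)) (oddexp_pos n u))))) N).

Definition kernel1_integral : C :=
  Copp (Csum (fun n => Cscal (b n)
     (Cadd (Cscal (INR n + / 2) (Cmul (Cexpi (- (INR n * th))) (Cmk 0 (-4 * odd_harmonic n))))
           (Cscal (/ 2) (Cmul (Cexpi ((INR n + 2) * th)) (Cmk 0 (4 * osum n)))))) N).

Lemma chord_unit_sqr u :
  Cmul (chord_unit th u) (chord_unit th u) = Copp (Cmul (Cexpi (2 * th)) (Cexpi u)).
Proof.
  unfold chord_unit. rewrite Cexpi_add.
  transitivity (Cmul (Cmul (Cmk 0 (-1)) (Cmk 0 (-1)))
                     (Cmul (Cexpi (th + u / 2)) (Cexpi (th + u / 2)))); [ring|].
  rewrite Cexpi_add. replace (th + u / 2 + (th + u / 2)) with (2 * th + u) by field.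
  replace (Cmul (Cmk 0 (-1)) (Cmk 0 (-1))) with (Copp (CR 1)) by (apply C_ext; simpl; ring).
  ring.
Qed.

Lemma Cconj_chord_tp u :
  Cconj (chord_tp N b th u)
  = Cmul (Copp Ci) (Csum (fun n => Cscal (b n) (Cmul (Cexpi (INR n * th)) (Cconj (oddexp_neg n u)))) N).
Proof.
  unfold chord_tp.
  replace (Cconj (Cmul Ci (Csum (fun n => Cscal (b n) (Cmul (Cexpi (- (INR n * th))) (oddexp_neg n u))) N)))
    with (Cmul (Copp Ci) (Cconj (Csum (fun n => Cscal (b n) (Cmul (Cexpi (- (INR n * th))) (oddexp_neg n u))) N)))
    by (apply C_ext; simpl; ring).
  rewrite <- Csum_conj. f_equal. apply Csum_ext; intros n _.
  apply C_ext; simpl; rewrite ?cos_neg, ?sin_neg; ring.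
Qed.

Lemma kernel1_eq_oddexp u : kernel1 u = kernel1_oddexp u.
Proof.
  unfold kernel1. rewrite Cmul_Re_conj_unit by apply chord_unit_norm.
  rewrite chord_unit_sqr, Cconj_chord_tp.
  replace (Cmul (Copp (Cmul (Cexpi (2 * th)) (Cexpi u)))
      (Cmul (Copp Ci) (Csum (fun n => Cscal (b n) (Cmul (Cexpi (INR n * th)) (Cconj (oddexp_neg n u)))) N)))
    with (Cmul Ci (Csum (fun n => Cscal (b n) (Cmul (Cexpi ((INR n + 2) * th)) (oddexp_pos n u))) N)).
  2: { rewrite <- !Csum_mul_l. apply Csum_ext; intros n _.
       rewrite <- Cexpi_mul_conj_oddexp_neg, !Cscal_CR.
       replace (Cexpi ((INR n + 2) * th)) with (Cmul (Cexpi (2 * th)) (Cexpi (INR n * th)))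
         by (rewrite Cexpi_add; f_equal; ring).
       ring. }
  unfold chord_tpd, chord_tp, kernel1_oddexp. rewrite Cscal_CR.
  set (Sy := Csum (fun n => Cscal (INR n * b n) (Cmul (Cexpi (- (INR n * th))) (oddexp_neg n u))) N).
  set (Sz := Csum (fun n => Cscal (b n) (Cmul (Cexpi (- (INR n * th))) (oddexp_neg n u))) N).
  set (SB := Csum (fun n => Cscal (b n) (Cmul (Cexpi ((INR n + 2) * th)) (oddexp_pos n u))) N).
  transitivity (Cadd (Cmul (Cmul Ci Ci) Sy)
                     (Cadd (Cmul (Cmul (Cmul Ci Ci) (CR (/ 2))) Sz)
                           (Cmul (Cmul (Cmul Ci Ci) (CR (/ 2))) SB))); [ring|].
  unfold Sy, Sz, SB. rewrite Csum_lin3, <- Csum_opp. apply Csum_ext; intros n _.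
  rewrite !Cscal_CR.
  replace (Cmul Ci Ci) with (Copp (CR 1)) by (apply C_ext; simpl; ring).
  apply C_ext; simpl; ring.
Qed.

Lemma CInt_kernel1 : CInt kernel1 0 (2 * PI) kernel1_integral.
Proof.
  apply (CInt_ext kernel1_oddexp); [intros; symmetry; apply kernel1_eq_oddexp|].
  apply CInt_opp.
  apply (CInt_Csum (fun n u => Cscal (b n)
     (Cadd (Cscal (INR n + / 2) (Cmul (Cexpi (- (INR n * th))) (oddexp_neg n u)))
           (Cscal (/ 2) (Cmul (Cexpi ((INR n + 2) * th)) (oddexp_pos n u)))))).
  intros n. apply CInt_scal. apply CInt_add; apply CInt_scal; apply CInt_mul_l.
  - apply CInt_oddexp_neg.
  - apply CInt_oddexp_pos.
Qed.

End Kernel1.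

Definition Cderivable0 (f : R -> C) (d : C) : Prop :=
  derivable_pt_lim (fun t => Cre (f t)) 0 (Cre d) /\
  derivable_pt_lim (fun t => Cim (f t)) 0 (Cim d).

Lemma derivable_pt_lim_ext_eq (f g : R -> R) x l l' : (forall t, f t = g t) -> l = l' ->
  derivable_pt_lim f x l -> derivable_pt_lim g x l'.
Proof. intros H <-. apply derivable_pt_lim_ext, H. Qed.

Lemma Cderivable0_ext f g d d' : (forall t, f t = g t) -> d = d' ->
  Cderivable0 f d -> Cderivable0 g d'.
Proof.
  intros H <- [H1 H2]; split;
    [eapply derivable_pt_lim_ext_eq; [| |exact H1]|eapply derivable_pt_lim_ext_eq; [| |exact H2]];
    try reflexivity; intros t; cbv beta; rewrite H; reflexivity.
Qed.

Lemma Cderivable0_const c : Cderivable0 (fun _ => c) (CR 0).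
Proof. split; simpl; apply derivable_pt_lim_const. Qed.

Lemma Cderivable0_scal c : Cderivable0 (fun t => Cscal t c) c.
Proof.
  split; simpl.
  - eapply derivable_pt_lim_ext_eq;
      [| |apply (derivable_pt_lim_scal id (Cre c) 0 1 (derivable_pt_lim_id 0))];
      [intros; unfold mult_real_fct, id; ring|ring].
  - eapply derivable_pt_lim_ext_eq;
      [| |apply (derivable_pt_lim_scal id (Cim c) 0 1 (derivable_pt_lim_id 0))];
      [intros; unfold mult_real_fct, id; ring|ring].
Qed.

Lemma Cderivable0_add f g df dg : Cderivable0 f df -> Cderivable0 g dg ->
  Cderivable0 (fun t => Cadd (f t) (g t)) (Cadd df dg).
Proof. intros [F1 F2] [G1 G2]; split; simpl; apply derivable_pt_lim_plus; assumption. Qed.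

Lemma Cderivable0_opp f df : Cderivable0 f df -> Cderivable0 (fun t => Copp (f t)) (Copp df).
Proof. intros [F1 F2]; split; simpl; apply derivable_pt_lim_opp; assumption. Qed.

Lemma Cderivable0_conj f df : Cderivable0 f df -> Cderivable0 (fun t => Cconj (f t)) (Cconj df).
Proof. intros [F1 F2]; split; simpl; [exact F1|apply derivable_pt_lim_opp, F2]. Qed.

Lemma Cderivable0_mul f g df dg : Cderivable0 f df -> Cderivable0 g dg ->
  Cderivable0 (fun t => Cmul (f t) (g t)) (Cadd (Cmul df (g 0)) (Cmul (f 0) dg)).
Proof.
  intros [F1 F2] [G1 G2]; split; simpl.
  - eapply derivable_pt_lim_ext_eq; [| |exact (derivable_pt_lim_minus _ _ _ _ _
        (derivable_pt_lim_mult _ _ _ _ _ F1 G1) (derivable_pt_lim_mult _ _ _ _ _ F2 G2))];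
      [intros; reflexivity|cbv beta; ring].
  - eapply derivable_pt_lim_ext_eq; [| |exact (derivable_pt_lim_plus _ _ _ _ _
        (derivable_pt_lim_mult _ _ _ _ _ F1 G2) (derivable_pt_lim_mult _ _ _ _ _ F2 G1))];
      [intros; reflexivity|cbv beta; ring].
Qed.

Section Regular.
Variables (N : nat) (b : nat -> R) (th : R).

Let chord_norm2 t u :=
  Cre (Cadd (chord_unit th u) (Cscal t (chord_tp N b th u)))
    * Cre (Cadd (chord_unit th u) (Cscal t (chord_tp N b th u)))
  + Cim (Cadd (chord_unit th u) (Cscal t (chord_tp N b th u)))
    * Cim (Cadd (chord_unit th u) (Cscal t (chord_tp N b th u))).

Lemma regular_integrand_expansion : exists t0 M, 0 < t0 /\
  forall t u, Rabs t < t0 ->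
    1 / 4 <= chord_norm2 t u /\
    Rabs (Cre (regular_integrand N b th t u) - Cre (kernel0 th u) - t * Cre (kernel1 N b th u))
      <= M * (t * t) /\
    Rabs (Cim (regular_integrand N b th t u) - Cim (kernel0 th u) - t * Cim (kernel1 N b th u))
      <= M * (t * t).
Proof.
  destruct (Ccont_bounded_chord_tpd N b th) as [_ [Ky By]].
  destruct (Ccont_bounded_chord_tp N b th) as [_ [Kz Bz]].
  set (K := Rabs Ky + Rabs Kz).
  assert (HK : 0 <= K) by (unfold K; pose proof (Rabs_pos Ky); pose proof (Rabs_pos Kz); lra).
  exists (/ (8 * (K + 1))), (120 * (K + 1) ^ 2).
  split; [apply Rinv_0_lt_compat; lra|]. intros t u Ht.
  destruct (By u) as [Y1 Y2], (Bz u) as [Z1 Z2].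
  pose proof (chord_unit_norm th u) as Hx.
  assert (Hx1 : Rabs (Cre (chord_unit th u)) <= 1) by (apply Rabs_le; nra).
  assert (Hx2 : Rabs (Cim (chord_unit th u)) <= 1) by (apply Rabs_le; nra).
  assert (Ht' : Rabs t <= / (8 * (K + 1))) by lra.
  assert (Y1' : Rabs (Cre (chord_tpd N b th u)) <= K)
    by (unfold K; pose proof (Rabs_pos Kz); pose proof (Rle_abs Ky); lra).
  assert (Y2' : Rabs (Cim (chord_tpd N b th u)) <= K)
    by (unfold K; pose proof (Rabs_pos Kz); pose proof (Rle_abs Ky); lra).
  assert (Z1' : Rabs (Cre (chord_tp N b th u)) <= K)
    by (unfold K; pose proof (Rabs_pos Ky); pose proof (Rle_abs Kz); lra).
  assert (Z2' : Rabs (Cim (chord_tp N b th u)) <= K)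
    by (unfold K; pose proof (Rabs_pos Ky); pose proof (Rle_abs Kz); lra).
  destruct (inv_norm_expansion _ _ _ _ _ _ K t Hx Hx1 Y1' Z1' Z2' HK Ht') as [P1 Q1].
  destruct (inv_norm_expansion _ _ _ _ _ _ K t Hx Hx2 Y2' Z1' Z2' HK Ht') as [_ Q2].
  unfold chord_norm2, regular_integrand, kernel0, kernel1, Cnorm.
  set (x := chord_unit th u) in *. set (y := chord_tpd N b th u) in *.
  set (z := chord_tp N b th u) in *.
  clearbody x y z. destruct x as [x1 x2], y as [y1 y2], z as [z1 z2]. simpl in *.
  replace (t * t) with (t ^ 2) by ring.
  split; [exact P1|split].
  - eapply Rle_trans; [|exact Q2]. right. rewrite <- Rabs_Ropp. f_equal. ring.
  - eapply Rle_trans; [|exact Q1]. right. f_equal. ring.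
Qed.

Lemma Ccontinuous_regular_integrand t : (forall u, 0 < chord_norm2 t u) ->
  Ccontinuous (regular_integrand N b th t).
Proof.
  intros Hpos. unfold regular_integrand.
  apply (Ccontinuous_ext (fun u =>
           Cmul Ci (Cscal (/ Cnorm (Cadd (chord_unit th u) (Cscal t (chord_tp N b th u))))
                          (Cadd (Cscal (-1) (chord_unit th u)) (Cscal t (chord_tpd N b th u))))));
    [intros; f_equal; f_equal; apply C_ext; simpl; ring|].
  assert (Hmul : forall V, Ccontinuous V -> Ccontinuous (fun u => Cmul Ci (V u))).
  { intros V HV. destruct (Ccont_bounded_const Ci) as [HC _].
    intros u; destruct (HV u), (HC u); simpl; split;
      [apply continuity_pt_minus|apply continuity_pt_plus]; apply continuity_pt_mult; assumption. }
  apply Hmul, Ccontinuous_scal_fun.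
  - intros u. apply continuity_pt_inv.
    + apply Ccontinuous_Cnorm.
      apply (Ccont_bounded_add _ _ (Ccont_bounded_chord_unit th)
               (Ccont_bounded_scal t _ (Ccont_bounded_chord_tp N b th))).
    + unfold Cnorm. intros E. apply sqrt_eq_0 in E; [specialize (Hpos u); unfold chord_norm2 in Hpos; lra|nra].
  - apply (Ccont_bounded_add _ _ (Ccont_bounded_scal (-1) _ (Ccont_bounded_chord_unit th))
             (Ccont_bounded_scal t _ (Ccont_bounded_chord_tpd N b th))).
Qed.

End Regular.

(* The substitution [a = th + u] turns the integral over the circle into one of
   the regular integrand. *)
Lemma is_RInt_F1_integrand (p : C -> R) N b th t :
  (forall u, continuity_pt (fun v => p (regular_integrand N b th t v)) u) ->
  is_RInt (fun u => p (regular_integrand N b th t u)) 0 (2 * PI)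
          (Defs.RInt (fun a => p (F1_integrand N b th t a)) 0 (2 * PI)).
Proof.
  intros Hc. pose proof PI_RGT_0.
  destruct (ex_RInt_continuous (V := R_CompleteNormedModule)
              (fun u => p (regular_integrand N b th t u)) 0 (2 * PI))
    as [L HL]; [intros z _; apply continuity_pt_filterlim, Hc|].
  replace (Defs.RInt _ 0 (2 * PI)) with L; [exact HL|].
  symmetry. apply RInt_of_is_RInt.
  apply (is_RInt_periodic_shift (fun a => p (F1_integrand N b th t a))
           ltac:(intros; cbv beta; rewrite F1_integrand_2PI; reflexivity) th L).
  apply is_RInt_ext with (2 := HL). intros u Hu.
  rewrite Rmin_left in Hu by lra. rewrite Rmax_right in Hu by lra.
  rewrite F1_integrand_regular by lra. reflexivity.
Qed.

Lemma Tint_F1_integrand_derivative N b th :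
  let I := fun t => Cmk (Defs.RInt (fun a => Cre (F1_integrand N b th t a)) 0 (2 * PI))
                        (Defs.RInt (fun a => Cim (F1_integrand N b th t a)) 0 (2 * PI)) in
  I 0 = Cmul (Copp (Cexpi th)) (Cmk 0 4) /\ Cderivable0 I (kernel1_integral N b th).
Proof.
  intros I. pose proof PI_RGT_0.
  destruct (regular_integrand_expansion N b th) as [t0 [M [Ht0 APX]]].
  assert (CH : forall t, Rabs t < t0 -> Ccontinuous (regular_integrand N b th t)).
  { intros t Ht. apply Ccontinuous_regular_integrand.
    intros u. destruct (APX t u Ht) as [P _]. lra. }
  destruct (CInt_kernel0 th) as [G0r G0i].
  destruct (CInt_kernel1 N b th) as [G1r G1i].
  destruct (derivable_pt_lim_param_RInt (fun t u => Cre (regular_integrand N b th t u))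
              (fun t => Cre (I t)) (fun u => Cre (kernel0 th u)) (fun u => Cre (kernel1 N b th u))
              0 (2 * PI) (Cre (Cmul (Copp (Cexpi th)) (Cmk 0 4))) (Cre (kernel1_integral N b th))
              t0 M) as [Hre0 Hre]; auto; try lra.
  { intros t Ht. apply is_RInt_F1_integrand. intros u; apply (CH t Ht u). }
  { intros t u Ht _. apply (APX t u Ht). }
  destruct (derivable_pt_lim_param_RInt (fun t u => Cim (regular_integrand N b th t u))
              (fun t => Cim (I t)) (fun u => Cim (kernel0 th u)) (fun u => Cim (kernel1 N b th u))
              0 (2 * PI) (Cim (Cmul (Copp (Cexpi th)) (Cmk 0 4))) (Cim (kernel1_integral N b th))
              t0 M) as [Him0 Him]; auto; try lra.
  { intros t Ht. apply is_RInt_F1_integrand. intros u; apply (CH t Ht u). }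
  { intros t u Ht _. apply (APX t u Ht). }
  split; [apply C_ext; assumption|split; assumption].
Qed.

Lemma F1_eq_Tint_F1_integrand Om N b th t :
  F1 Om N (fun n => t * b n) th =
  Cim (Cmul (Csub (Cscal Om (curve N b t (Cexpi th)))
                  (Cdiv (Cmk (Defs.RInt (fun a => Cre (F1_integrand N b th t a)) 0 (2 * PI))
                             (Defs.RInt (fun a => Cim (F1_integrand N b th t a)) 0 (2 * PI)))
                        (Cmul (CR (2 * PI)) Ci)))
            (Cdiv (Cconj (dcurve N b t (Cexpi th))) (Cexpi th))).
Proof. reflexivity. Qed.

(* The constant [2 / PI] is the contribution of the unperturbed circle: the integral of
   [kernel0] is [- 4 i w], so the term [Om phi - I] of [G1] equals [(Om + 2 / PI) w] at [t = 0]. *)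
Definition F1_derivative (Om : R) (N : nat) (b : nat -> R) (th : R) : C :=
  Cadd (Cmul (Cmul (CR Om) (Cexpi (- th))) (tp_eval N b (Cexpi th)))
    (Cadd (Cmul (Cmul (Cmk 0 (- / (2 * PI))) (Cexpi (- th))) (Copp (kernel1_integral N b th)))
          (Cmul (CR (Om + 2 / PI)) (Cconj (tp_deriv N b (Cexpi th))))).

Lemma F1_derivable_pt_lim Om N b th :
  derivable_pt_lim (fun t => F1 Om N (fun n => t * b n) th) 0 (Cim (F1_derivative Om N b th)).
Proof.
  destruct (Tint_F1_integrand_derivative N b th) as [I0 HI].
  set (I := fun t => Cmk _ _) in HI. change (I 0 = Cmul (Copp (Cexpi th)) (Cmk 0 4)) in I0.
  set (V1 := kernel1_integral N b th) in *.
  set (w := Cexpi th). set (hw := tp_eval N b w). set (dw := tp_deriv N b w).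
  set (c2 := Cmul (CR (2 * PI)) Ci).
  set (e1 := Cexpi (- th)). set (k := Cmk 0 (- / (2 * PI))).
  assert (Hk : Cinv c2 = k) by (pose proof PI_RGT_0; apply C_ext; simpl; field; lra).
  assert (Hw : Cinv w = e1) by (unfold w, e1; apply Cinv_expi).
  set (P := fun t => Csub (Cscal Om (Cadd w (Cscal t hw))) (Cdiv (I t) c2)).
  set (Q := fun t => Cdiv (Cconj (Cadd (CR 1) (Cscal t dw))) w).
  assert (EF : forall t, Cim (Cmul (P t) (Q t)) = F1 Om N (fun n => t * b n) th).
  { intros t. rewrite F1_eq_Tint_F1_integrand. unfold curve, dcurve.
    rewrite tp_eval_scal, tp_deriv_scal. reflexivity. }
  assert (HP : Cderivable0 P (Cadd (Cmul (CR Om) hw) (Copp (Cmul V1 k)))).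
  { eapply Cderivable0_ext; [| |apply (Cderivable0_add _ _ _ _
        (Cderivable0_mul _ _ _ _ (Cderivable0_const (CR Om))
           (Cderivable0_add _ _ _ _ (Cderivable0_const w) (Cderivable0_scal hw)))
        (Cderivable0_opp _ _ (Cderivable0_mul _ _ _ _ HI (Cderivable0_const (Cinv c2)))))].
    - intros t. unfold P, Csub, Cdiv. rewrite (Cscal_CR Om). reflexivity.
    - rewrite Hk. apply C_ext; simpl; ring. }
  assert (HQ : Cderivable0 Q (Cmul (Cconj dw) e1)).
  { eapply Cderivable0_ext; [| |apply (Cderivable0_mul _ _ _ _ (Cderivable0_conj _ _
        (Cderivable0_add _ _ _ _ (Cderivable0_const (CR 1)) (Cderivable0_scal dw)))
        (Cderivable0_const (Cinv w)))].
    - intros t. unfold Q, Cdiv. reflexivity.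
    - rewrite Hw. apply C_ext; simpl; ring. }
  destruct (Cderivable0_mul _ _ _ _ HP HQ) as [_ HD].
  eapply derivable_pt_lim_ext_eq; [exact EF| |exact HD].
  assert (Q0 : Q 0 = e1) by (unfold Q, Cdiv; rewrite Hw; apply C_ext; simpl; ring).
  assert (P0 : P 0 = Cscal (Om + 2 / PI) w).
  { unfold P. cbv beta. rewrite I0. unfold c2, Cdiv. pose proof PI_RGT_0. apply C_ext; simpl; field; lra. }
  assert (Hwe : Cmul w e1 = CR 1) by (unfold w, e1; rewrite Cexpi_add, Rplus_opp_r, Cexpi_0; reflexivity).
  rewrite Q0, P0, Cscal_CR. unfold F1_derivative. fold w e1 k hw dw V1. f_equal.
  transitivity (Cadd (Cmul (Cmul (CR Om) e1) hw) (Cadd (Cmul (Cmul k e1) (Copp V1))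
                 (Cmul (CR (Om + 2 / PI)) (Cmul (Cmul w e1) (Cconj dw))))); [ring|].
  rewrite Hwe. ring.
Qed.

Definition Lformula_mode (Om : R) (b : nat -> R) (th : R) (n : nat) : R :=
  - (INR n + 1) * (Om - Omega1 (S n)) * b n * sin ((INR n + 1) * th).

Lemma Omega1_1 : Omega1 1 = 0.
Proof. unfold Omega1. simpl. ring. Qed.

Lemma Cre_Lformula Om N b th :
  Cre (Lformula Om N b (Cexpi th)) = sum_f_R0 (Lformula_mode Om b th) N.
Proof.
  unfold Lformula. cbn [Cre Cadd Cscal]. rewrite Cre_Csum.
  induction N as [|N IH].
  - simpl. unfold Lformula_mode. rewrite Omega1_1. simpl. rewrite Rplus_0_l, (Rmult_1_l th). field.
  - cbn [sum_f_R0]. rewrite <- IH, Rmult_plus_distr_l, <- Rplus_assoc. f_equal.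
    unfold Lformula_mode. rewrite !Cpow_expi, !Cpow_conj_expi.
    cbn [Cre Cim Cmul Cscal Csub Cadd Copp Ci Cexpi].
    rewrite cos_neg, sin_neg, !S_INR. field.
Qed.

Lemma Cim_Lformula Om N b th : Cim (Lformula Om N b (Cexpi th)) = 0.
Proof.
  unfold Lformula. cbn [Cim Cadd Cscal]. rewrite Cim_Csum.
  induction N as [|N IH].
  - simpl. ring.
  - cbn [sum_f_R0]. rewrite Rmult_plus_distr_l, <- Rplus_assoc, IH.
    rewrite !Cpow_expi, !Cpow_conj_expi. cbn [Cre Cim Cmul Cscal Csub Cadd Copp Ci Cexpi].
    rewrite cos_neg, sin_neg. simpl. ring.
Qed.

Lemma F1_derivative_mode Om b th n :
  let e1 := Cexpi (- th) in
  let k := Cmk 0 (- / (2 * PI)) in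
  Cim (Cadd (Cmul (Cmul (CR Om) e1) (Cscal (b n) (Cexpi (- (INR n * th)))))
        (Cadd (Cmul (Cmul k e1)
                 (Cscal (b n)
                    (Cadd (Cscal (INR n + / 2) (Cmul (Cexpi (- (INR n * th))) (Cmk 0 (-4 * odd_harmonic n))))
                          (Cscal (/ 2) (Cmul (Cexpi ((INR n + 2) * th)) (Cmk 0 (4 * osum n)))))))
              (Cmul (CR (Om + 2 / PI)) (Cconj (Cscal (- INR n * b n) (Cexpi (- (INR (S n) * th))))))))
  = Lformula_mode Om b th n.
Proof.
  intros e1 k.
  set (ea := Cexpi (- (INR n * th))). set (eb := Cexpi ((INR n + 2) * th)).
  assert (E1 : Cmul e1 ea = Cexpi (- ((INR n + 1) * th)))
    by (unfold e1, ea; rewrite Cexpi_add; f_equal; ring).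
  assert (E2 : Cmul e1 eb = Cexpi ((INR n + 1) * th))
    by (unfold e1, eb; rewrite Cexpi_add; f_equal; ring).
  replace (Cconj (Cscal (- INR n * b n) (Cexpi (- (INR (S n) * th)))))
    with (Cscal (- INR n * b n) (Cexpi ((INR n + 1) * th)))
    by (rewrite S_INR; apply C_ext; simpl; rewrite ?cos_neg, ?sin_neg; ring).
  transitivity (Cim (Cadd (Cmul (CR (Om * b n)) (Cmul e1 ea))
        (Cadd (Cmul (Cmul k (CR (b n * (INR n + / 2)))) (Cmul (Cmk 0 (-4 * odd_harmonic n)) (Cmul e1 ea)))
         (Cadd (Cmul (Cmul k (CR (b n * / 2))) (Cmul (Cmk 0 (4 * osum n)) (Cmul e1 eb)))
               (Cmul (CR ((Om + 2 / PI) * (- INR n * b n))) (Cexpi ((INR n + 1) * th))))))).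
  - f_equal. rewrite !Cscal_CR.
    replace (CR (Om * b n)) with (Cmul (CR Om) (CR (b n))) by (apply C_ext; simpl; ring).
    replace (CR (b n * (INR n + / 2))) with (Cmul (CR (b n)) (CR (INR n + / 2)))
      by (apply C_ext; simpl; ring).
    replace (CR (b n * / 2)) with (Cmul (CR (b n)) (CR (/ 2))) by (apply C_ext; simpl; ring).
    replace (CR ((Om + 2 / PI) * (- INR n * b n))) with (Cmul (CR (Om + 2 / PI)) (CR (- INR n * b n)))
      by (apply C_ext; simpl; ring).
    ring.
  - rewrite E1, E2. unfold k, Lformula_mode. cbn [Cim Cre Cadd Cmul CR Cexpi].
    rewrite cos_neg, sin_neg. unfold Omega1. replace (S n - 1)%nat with n by lia.
    rewrite odd_harmonic_osum. pose proof PI_RGT_0. pose proof (pos_INR n). field. split; lra.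
Qed.

Lemma Cim_F1_derivative Om N b th :
  Cim (F1_derivative Om N b th) = Cre (Lformula Om N b (Cexpi th)).
Proof.
  unfold F1_derivative, kernel1_integral. rewrite Copp_involutive.
  rewrite tp_eval_expi, tp_deriv_expi, <- Csum_conj, Csum_lin3, Cim_Csum, Cre_Lformula.
  apply sum_eq; intros n _.
  pose proof (F1_derivative_mode Om b th n) as HT. cbv zeta in HT. rewrite <- HT.
  reflexivity.
Qed.

(** * The frequencies [Omega1] *)

Lemma PI_gt_3 : 3 < PI.
Proof. pose proof PI2_3_2. lra. Qed.

Lemma ln_le_sub_1 x : 0 < x -> ln x <= x - 1.
Proof. intros H. pose proof (exp_ineq1_le (ln x)). rewrite exp_ln in H0 by exact H. lra. Qed.

Lemma ln_ge_1_sub_inv x : 0 < x -> 1 - / x <= ln x.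
Proof.
  intros H. pose proof (ln_le_sub_1 (/ x) (Rinv_0_lt_compat _ H)).
  rewrite ln_Rinv in H0 by exact H. lra.
Qed.

Lemma ln_nonneg x : 1 <= x -> 0 <= ln x.
Proof.
  intros H. pose proof (ln_ge_1_sub_inv x ltac:(lra)).
  assert (/ x <= 1) by (rewrite <- Rinv_1; apply Rinv_le_contravar; lra). lra.
Qed.

Lemma ln_le x y : 0 < x -> x <= y -> ln x <= ln y.
Proof.
  intros Hx H. destruct (Rle_lt_or_eq_dec _ _ H) as [H'|<-]; [left; apply ln_increasing|]; lra.
Qed.

Lemma INR_ge_1 n : (1 <= n)%nat -> 1 <= INR n.
Proof. intros H. apply (le_INR 1) in H. exact H. Qed.

Lemma one_plus_ln_INR_pos n : (1 <= n)%nat -> 0 < 1 + ln (INR n).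
Proof. intros H. pose proof (ln_nonneg _ (INR_ge_1 _ H)). lra. Qed.

Lemma osum_nonneg n : 0 <= osum n.
Proof.
  induction n; cbn [osum]; [lra|].
  assert (0 < / (2 * INR (S n) + 1)) by (apply Rinv_0_lt_compat, odd_pos). lra.
Qed.

Lemma ln_succ_diff x : 0 < x -> ln (x + 1) - ln x = ln ((x + 1) / x).
Proof. intros Hx. unfold Rdiv. rewrite ln_mult, ln_Rinv by (try apply Rinv_0_lt_compat; lra). ring. Qed.

Lemma osum_le_ln n : osum n <= ln (INR n + 1).
Proof.
  induction n as [|n IH].
  - simpl. rewrite Rplus_0_l, ln_1. lra.
  - cbn [osum]. rewrite S_INR. pose proof (pos_INR n).
    assert (/ (2 * (INR n + 1) + 1) <= ln (INR n + 1 + 1) - ln (INR n + 1)).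
    { rewrite ln_succ_diff by lra.
      eapply Rle_trans; [|apply ln_ge_1_sub_inv, Rdiv_lt_0_compat; lra].
      apply Rle_trans with (/ (INR n + 1 + 1)); [apply Rinv_le_contravar; lra|].
      right. field. lra. }
    lra.
Qed.

Lemma osum_diff_ge_ln j d :
  / 2 * (ln (2 * INR (j + d) + 3) - ln (2 * INR j + 3)) <= osum (j + d) - osum j.
Proof.
  induction d as [|d IH].
  - rewrite Nat.add_0_r. lra.
  - replace (j + S d)%nat with (S (j + d)) by lia. cbn [osum].
    set (n := (j + d)%nat) in *. rewrite S_INR. pose proof (pos_INR n).
    assert (/ 2 * (ln (2 * (INR n + 1) + 3) - ln (2 * INR n + 3)) <= / (2 * (INR n + 1) + 1)).
    { replace (2 * (INR n + 1) + 3) with ((2 * INR n + 3) + 2) by ring.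
      replace (ln (2 * INR n + 3 + 2) - ln (2 * INR n + 3))
        with (ln ((2 * INR n + 3 + 2) / (2 * INR n + 3)))
        by (unfold Rdiv; rewrite ln_mult, ln_Rinv by (try apply Rinv_0_lt_compat; lra); ring).
      pose proof (ln_le_sub_1 ((2 * INR n + 3 + 2) / (2 * INR n + 3))
                    ltac:(apply Rdiv_lt_0_compat; lra)).
      replace ((2 * INR n + 3 + 2) / (2 * INR n + 3) - 1) with (2 * / (2 * (INR n + 1) + 1))
        in H0 by (field; lra).
      lra. }
    lra.
Qed.

Lemma Omega1_S k : (1 <= k)%nat -> Omega1 (S k) = Omega1 k + 2 / PI * / (2 * INR k + 1).
Proof.
  intros Hk. unfold Omega1. replace (S k - 1)%nat with k by lia.
  destruct k as [|k]; [lia|]. replace (S k - 1)%nat with k by lia. cbn [osum]. ring.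
Qed.

Lemma Omega1_nonneg m : 0 <= Omega1 m.
Proof.
  unfold Omega1. pose proof (osum_nonneg (m - 1)). pose proof PI_gt_3.
  apply Rmult_le_pos; [apply Rlt_le, Rdiv_lt_0_compat; lra|lra].
Qed.

Lemma Omega1_lt n p : (1 <= n)%nat -> (n < p)%nat -> Omega1 n < Omega1 p.
Proof.
  intros Hn Hp. pose proof PI_gt_3.
  assert (Hstep : forall k, 0 < 2 / PI * / (2 * INR k + 1))
    by (intros k; apply Rmult_lt_0_compat; [apply Rdiv_lt_0_compat|apply Rinv_0_lt_compat, odd_pos]; lra).
  induction Hp as [|p Hp IH]; rewrite Omega1_S by lia;
    [pose proof (Hstep n)|pose proof (Hstep p)]; lra.
Qed.

Lemma Omega1_inj n p : (1 <= n)%nat -> (1 <= p)%nat -> Omega1 n = Omega1 p -> n = p.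
Proof.
  intros Hn Hp E. destruct (Nat.lt_trichotomy n p) as [H|[H|H]]; auto.
  - pose proof (Omega1_lt n p Hn H). lra.
  - pose proof (Omega1_lt p n Hp H). lra.
Qed.

Lemma Omega1_le_ln n : (1 <= n)%nat -> Omega1 n <= ln (INR n).
Proof.
  intros Hn. unfold Omega1. pose proof (osum_le_ln (n - 1)). pose proof (osum_nonneg (n - 1)).
  pose proof PI_gt_3.
  rewrite minus_INR in H by lia. replace (INR n - INR 1 + 1) with (INR n) in H by (simpl; ring).
  assert (2 / PI <= 1)
    by (apply Rmult_le_reg_r with PI; [lra|]; unfold Rdiv; rewrite Rmult_assoc, Rinv_l; lra).
  nra.
Qed.

Lemma finite_pos_lower_bound (f : nat -> R) N : (forall n, (n <= N)%nat -> 0 < f n) ->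
  exists c, 0 < c /\ forall n, (n <= N)%nat -> c <= f n.
Proof.
  induction N as [|N IH]; intros H.
  - exists (f 0%nat). split; [apply H; lia|]. intros n Hn. replace n with 0%nat by lia. lra.
  - destruct IH as [c [Hc Hc']]; [intros; apply H; lia|].
    exists (Rmin c (f (S N))). split; [apply Rmin_glb_lt; auto; apply H; lia|].
    intros n Hn. destruct (Nat.eq_dec n (S N)) as [->|Hne]; [apply Rmin_r|].
    eapply Rle_trans; [apply Rmin_l|]. apply Hc'; lia.
Qed.

(* [Omega1] grows like [ln n / PI]: once [2 n + 1 >= (2 m + 1)^2], half of
   [ln (2 n + 1) - ln (2 m + 1)] is at least a quarter of [ln (2 n + 1)]. *)
Lemma Omega1_gap_large m n : (2 <= m)%nat -> ((2 * m + 1) * (2 * m + 1) <= n)%nat ->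
  / (4 * PI) * (1 + ln (INR n)) <= Omega1 n - Omega1 m.
Proof.
  intros Hm HnN. pose proof PI_gt_3 as HPI. pose proof (pos_INR m).
  assert (Hn : (1 <= n)%nat) by nia.
  pose proof (INR_ge_1 n Hn).
  pose proof (osum_diff_ge_ln (m - 1) (n - m)) as A.
  replace (m - 1 + (n - m))%nat with (n - 1)%nat in A by lia.
  rewrite !minus_INR in A by lia. simpl INR in A.
  replace (2 * (INR n - 1) + 3) with (2 * INR n + 1) in A by ring.
  replace (2 * (INR m - 1) + 3) with (2 * INR m + 1) in A by ring.
  assert (B : 2 * ln (2 * INR m + 1) <= ln (2 * INR n + 1)).
  { replace (2 * ln (2 * INR m + 1)) with (ln ((2 * INR m + 1) * (2 * INR m + 1)))
      by (rewrite ln_mult by lra; ring).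
    apply ln_le; [nra|].
    apply le_INR in HnN. rewrite mult_INR, !plus_INR, mult_INR in HnN. simpl INR in HnN. nra. }
  assert (C : 1 + ln (INR n) <= 2 * ln (2 * INR n + 1)).
  { assert (ln (INR n) <= ln (2 * INR n + 1)) by (apply ln_le; lra).
    assert (1 <= ln (2 * INR n + 1)).
    { rewrite <- (ln_exp 1) at 1. apply ln_le; [apply exp_pos|].
      pose proof exp_le_3; lra. }
    lra. }
  pose proof (ln_nonneg (2 * INR m + 1) ltac:(lra)).
  assert (D : 0 < / (4 * PI)) by (apply Rinv_0_lt_compat; lra).
  apply Rle_trans with (/ (4 * PI) * (2 * ln (2 * INR n + 1))); [apply Rmult_le_compat_l; lra|].
  replace (/ (4 * PI) * (2 * ln (2 * INR n + 1))) with (2 / PI * (/ 4 * ln (2 * INR n + 1)))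
    by (field; lra).
  unfold Omega1.
  replace (2 / PI * osum (n - 1) - 2 / PI * osum (m - 1))
    with (2 / PI * (osum (n - 1) - osum (m - 1))) by ring.
  apply Rmult_le_compat_l; [apply Rlt_le, Rdiv_lt_0_compat; lra|]. lra.
Qed.

Lemma Omega1_gap m : (2 <= m)%nat -> exists c, 0 < c /\
  forall n, (1 <= n)%nat -> n <> m -> c * (1 + ln (INR n)) <= Rabs (Omega1 m - Omega1 n).
Proof.
  intros Hm.
  set (N1 := ((2 * m + 1) * (2 * m + 1))%nat).
  set (f := fun n => if ((1 <=? n)%nat && negb (n =? m)%nat)%bool
                     then Rabs (Omega1 m - Omega1 n) / (1 + ln (INR n)) else 1).
  destruct (finite_pos_lower_bound f N1) as [c1 [Hc1 Hc1']].
  { intros n _. unfold f. destruct (1 <=? n)%nat eqn:E1, (n =? m)%nat eqn:E2; simpl; try lra.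
    apply Nat.leb_le in E1. apply Nat.eqb_neq in E2.
    apply Rdiv_lt_0_compat; [|apply one_plus_ln_INR_pos; auto].
    apply Rabs_pos_lt. intros E. apply E2. symmetry. apply Omega1_inj; try lia. lra. }
  pose proof PI_gt_3.
  exists (Rmin c1 (/ (4 * PI))). split; [apply Rmin_glb_lt; auto; apply Rinv_0_lt_compat; lra|].
  intros n Hn Hnm. pose proof (one_plus_ln_INR_pos n Hn).
  destruct (le_lt_dec n N1) as [HnN|HnN].
  - specialize (Hc1' n HnN). unfold f in Hc1'.
    replace ((1 <=? n)%nat && negb (n =? m)%nat)%bool with true in Hc1'
      by (symmetry; apply andb_true_intro;
          split; [apply Nat.leb_le; lia|apply Bool.negb_true_iff, Nat.eqb_neq; auto]).
    apply Rle_trans with (c1 * (1 + ln (INR n))); [apply Rmult_le_compat_r; [lra|apply Rmin_l]|].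
    apply Rmult_le_reg_r with (/ (1 + ln (INR n))); [apply Rinv_0_lt_compat; lra|].
    rewrite Rmult_assoc, Rinv_r, Rmult_1_r by lra. exact Hc1'.
  - pose proof (Omega1_lt m n ltac:(lia) ltac:(unfold N1 in HnN; nia)).
    rewrite Rabs_left by lra.
    apply Rle_trans with (/ (4 * PI) * (1 + ln (INR n))); [apply Rmult_le_compat_r; [lra|apply Rmin_r]|].
    pose proof (Omega1_gap_large m n Hm ltac:(unfold N1 in HnN; lia)). lra.
Qed.

(** * The operator [L_coef] on [B^s] *)

Lemma series_val_is u l : infinite_sum u l -> series_val u = l.
Proof.
  intros H. unfold series_val. apply (uniqueness_sum u); [|exact H].
  apply (epsilon_spec (inhabits 0) (fun l => infinite_sum u l)). exists l; exact H.
Qed.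

Lemma infinite_sum_ext u v l : (forall n, u n = v n) -> infinite_sum u l -> infinite_sum v l.
Proof. intros E H. replace v with u; auto. apply functional_extensionality; auto. Qed.

Lemma infinite_sum_comparison u v l : (forall n, 0 <= u n <= v n) -> infinite_sum v l ->
  exists l', infinite_sum u l' /\ l' <= l.
Proof.
  intros H Hv.
  destruct (Rseries_CV_comp u v H (exist _ l Hv)) as [l' Hl'].
  exists l'. split; [exact Hl'|].
  apply (Rle_cv_lim (Un := sum_f_R0 u) (Vn := sum_f_R0 v)); auto.
  intros n. apply sum_Rle. intros; apply H.
Qed.

Lemma infinite_sum_add u v l1 l2 : infinite_sum u l1 -> infinite_sum v l2 ->
  infinite_sum (fun n => u n + v n) (l1 + l2).
Proof.
  intros H1 H2 eps Heps. destruct (CV_plus _ _ _ _ H1 H2 eps Heps) as [N HN].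
  exists N. intros n Hn. rewrite sum_plus. apply HN, Hn.
Qed.

Lemma infinite_sum_scal u l K : infinite_sum u l -> infinite_sum (fun n => K * u n) (K * l).
Proof.
  intros H.
  assert (HK : Un_cv (fun _ => K) K)
    by (intros eps Heps; exists 0%nat; intros; unfold R_dist; rewrite Rminus_diag, Rabs_R0; lra).
  intros eps Heps. destruct (CV_mult _ _ _ _ HK H eps Heps) as [N HN].
  exists N. intros n Hn.
  replace (sum_f_R0 (fun n => K * u n) n) with (K * sum_f_R0 u n)
    by (rewrite scal_sum; apply sum_eq; intros; ring).
  apply HN, Hn.
Qed.

Lemma infinite_sum_shift_right v l : infinite_sum v l ->
  infinite_sum (fun k => match k with O => 0 | S j => v j end) l.
Proof.
  intros H.
  assert (Hsum : forall n,
            sum_f_R0 (fun k => match k with O => 0 | S j => v j end) (S n) = sum_f_R0 v n).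
  { induction n as [|n IH]; [simpl; ring|]. rewrite (tech5 _ (S n)), IH. reflexivity. }
  intros eps Heps. destruct (H eps Heps) as [N HN]. exists (S N). intros n Hn.
  destruct n as [|n]; [lia|]. rewrite Hsum. apply HN. lia.
Qed.

Lemma infinite_sum_shift_left u l : infinite_sum u l ->
  infinite_sum (fun k => u (S k)) (l - u 0%nat).
Proof.
  intros H eps Heps. destruct (H eps Heps) as [N HN]. exists N. intros n Hn.
  specialize (HN (S n) ltac:(lia)). unfold R_dist in *.
  replace (sum_f_R0 (fun k => u (S k)) n - (l - u 0%nat)) with (sum_f_R0 u (S n) - l); auto.
  rewrite decomp_sum by lia. simpl pred. ring.
Qed.

Lemma infinite_sum_single u j : (forall n, n <> j -> u n = 0) -> infinite_sum u (u j).
Proof.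
  intros H.
  assert (Hpart : forall n, sum_f_R0 u n = if (n <? j)%nat then 0 else u j).
  { induction n as [|n IH]; simpl.
    - destruct j as [|j]; simpl; [reflexivity|]. apply H; lia.
    - rewrite IH. destruct (Nat.ltb_spec n j), (Nat.ltb_spec (S n) j); try lia.
      + rewrite (H (S n)) by lia. ring.
      + replace j with (S n) by lia. ring.
      + rewrite (H (S n)) by lia. ring. }
  intros eps Heps. exists j. intros n Hn. rewrite Hpart.
  destruct (Nat.ltb_spec n j); [lia|]. unfold R_dist. rewrite Rminus_diag, Rabs_R0. lra.
Qed.

Lemma infinite_sum_zero : infinite_sum (fun _ => 0) 0.
Proof. exact (infinite_sum_single (fun _ => 0) 0 (fun _ _ => eq_refl)). Qed.

Lemma infinite_sum_ge_term u l j : (forall n, 0 <= u n) -> infinite_sum u l -> u j <= l.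
Proof.
  intros Hpos H. apply Rle_trans with (sum_f_R0 u j).
  - destruct j as [|j]; simpl; [lra|]. pose proof (cond_pos_sum u j Hpos). lra.
  - apply sum_incr; auto.
Qed.

Lemma Rpower_1_l y : Rpower 1 y = 1.
Proof. unfold Rpower. rewrite ln_1, Rmult_0_r. apply exp_0. Qed.

Lemma Rpower_sub_1 x s : 0 < x -> Rpower x s = Rpower x (s - 1) * x.
Proof. intros H. rewrite <- (Rpower_1 x H) at 3. rewrite <- Rpower_plus. f_equal. ring. Qed.

Lemma Rpower_INR_S_le n s : (1 <= n)%nat -> 0 <= s ->
  Rpower (INR (S n)) s <= Rpower 2 s * Rpower (INR n) s.
Proof.
  intros Hn Hs. pose proof (INR_ge_1 n Hn). rewrite S_INR, Rpower_mult_distr by lra.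
  apply Rle_Rpower_l; [exact Hs|]. lra.
Qed.

Lemma Rpower_INR_le_S n s : (1 <= n)%nat -> 0 <= s ->
  Rpower (INR n) s <= Rpower (INR (S n)) s.
Proof.
  intros Hn Hs. pose proof (INR_ge_1 n Hn). rewrite S_INR.
  apply Rle_Rpower_l; [exact Hs|]. lra.
Qed.

Lemma L_coef_S Om b n : L_coef Om b (S n) = INR (S n) * (Om - Omega1 (S n)) * b n / 2.
Proof. destruct n as [|n]; [rewrite Omega1_1; simpl; field|reflexivity]. Qed.

Lemma L_coef_sub Om b c :
  (fun n => L_coef Om c n - L_coef Om b n) = L_coef Om (fun n => c n - b n).
Proof.
  apply functional_extensionality. intros [|n]; [simpl; ring|]. rewrite !L_coef_S. field.
Qed.

Lemma BLog_term_S s g n :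
  BLog_term s g (S n) = Rpower (INR (S n)) s / (1 + ln (INR (S n))) * Rabs (g (S n)).
Proof. reflexivity. Qed.

Lemma Bs_term_nonneg s b n : 0 <= Bs_term s b n.
Proof.
  destruct n; simpl; [apply Rabs_pos|].
  apply Rmult_le_pos; [left; apply exp_pos|apply Rabs_pos].
Qed.

Lemma BLog_weight_pos s n : 0 < Rpower (INR (S n)) s / (1 + ln (INR (S n))).
Proof. apply Rdiv_lt_0_compat; [apply exp_pos|apply one_plus_ln_INR_pos; lia]. Qed.

Lemma BLog_term_nonneg s g n : 0 <= BLog_term s g n.
Proof.
  destruct n; [simpl; lra|]. rewrite BLog_term_S.
  apply Rmult_le_pos; [apply Rlt_le, BLog_weight_pos|apply Rabs_pos].
Qed.

Lemma Bs_term_S_le s b n : 0 <= s ->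
  Rpower (INR (S n)) s * Rabs (b n) <= Rpower 2 s * Bs_term s b n.
Proof.
  intros Hs. destruct n as [|n].
  - cbn [Bs_term]. replace (INR 1) with 1 by reflexivity. rewrite Rpower_1_l.
    assert (1 <= Rpower 2 s) by (rewrite <- (Rpower_O 2) by lra; apply Rle_Rpower; lra).
    pose proof (Rabs_pos (b 0%nat)). nra.
  - cbn [Bs_term]. rewrite <- Rmult_assoc.
    apply Rmult_le_compat_r; [apply Rabs_pos|]. apply Rpower_INR_S_le; [lia|exact Hs].
Qed.

Lemma Omega1_dist_le_log Om N : (1 <= N)%nat ->
  Rabs (Om - Omega1 N) <= (Rabs Om + 1) * (1 + ln (INR N)).
Proof.
  intros HN. pose proof (Omega1_le_ln N HN). pose proof (Omega1_nonneg N).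
  pose proof (ln_nonneg (INR N) (INR_ge_1 N HN)). pose proof (Rabs_pos Om).
  eapply Rle_trans; [apply Rabs_triang|]. rewrite Rabs_Ropp, (Rabs_right (Omega1 N)) by lra. nra.
Qed.

(* [L] multiplies the [n]-th mode by [(n+1) (Om - Omega1 (n+1)) / 2 = O(n ln n)], which is
   exactly the loss of weight from [B^s] to [B^{s-1}_Log]. *)
Lemma BLog_term_L_coef_le Om s : 1 <= s ->
  forall b n, BLog_term (s - 1) (L_coef Om b) (S n) <= (Rabs Om + 1) * Rpower 2 s * Bs_term s b n.
Proof.
  intros Hs b n. rewrite BLog_term_S, L_coef_S.
  pose proof (one_plus_ln_INR_pos (S n) ltac:(lia)) as Hl.
  pose proof (INR_ge_1 (S n) ltac:(lia)) as HN.
  set (N := S n) in *.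
  replace (Rpower (INR N) (s - 1) / (1 + ln (INR N)) * Rabs (INR N * (Om - Omega1 N) * b n / 2))
    with (Rpower (INR N) s * Rabs (b n) * (Rabs (Om - Omega1 N) / (1 + ln (INR N))) / 2).
  2: { rewrite (Rpower_sub_1 (INR N) s) by lra. unfold Rdiv.
       rewrite !Rabs_mult, (Rabs_right (INR N)), (Rabs_right (/ 2)) by lra. field. lra. }
  assert (Hr : Rabs (Om - Omega1 N) / (1 + ln (INR N)) <= Rabs Om + 1).
  { apply Rmult_le_reg_r with (1 + ln (INR N)); [lra|].
    unfold Rdiv. rewrite Rmult_assoc, Rinv_l, Rmult_1_r by lra.
    apply Omega1_dist_le_log. unfold N; lia. }
  assert (Hp : 0 <= Rabs (Om - Omega1 N) / (1 + ln (INR N)))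
    by (apply Rmult_le_pos; [apply Rabs_pos|left; apply Rinv_0_lt_compat; lra]).
  pose proof (Bs_term_S_le s b n ltac:(lra)) as Hb. fold N in Hb.
  assert (0 <= Rpower (INR N) s * Rabs (b n))
    by (apply Rmult_le_pos; [left; apply exp_pos|apply Rabs_pos]).
  pose proof (Rabs_pos Om).
  apply Rle_trans with (Rpower (INR N) s * Rabs (b n) * (Rabs Om + 1)); [|nra].
  assert (Rpower (INR N) s * Rabs (b n) * (Rabs (Om - Omega1 N) / (1 + ln (INR N)))
          <= Rpower (INR N) s * Rabs (b n) * (Rabs Om + 1)) by (apply Rmult_le_compat_l; lra).
  nra.
Qed.

Lemma L_coef_series Om s : 1 <= s -> exists K, 0 <= K /\
  forall b l, infinite_sum (Bs_term s b) l ->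
    exists l', infinite_sum (BLog_term (s - 1) (L_coef Om b)) l' /\ l' <= K * l.
Proof.
  intros Hs. exists ((Rabs Om + 1) * Rpower 2 s).
  split; [apply Rmult_le_pos; [pose proof (Rabs_pos Om); lra|left; apply exp_pos]|].
  intros b l Hl.
  apply (infinite_sum_comparison _
           (fun n => match n with O => 0 | S k => (Rabs Om + 1) * Rpower 2 s * Bs_term s b k end)).
  - intros n. split; [apply BLog_term_nonneg|].
    destruct n as [|n]; [simpl; lra|]. apply BLog_term_L_coef_le, Hs.
  - apply infinite_sum_shift_right, infinite_sum_scal, Hl.
Qed.

Lemma Bs_sub s b c : in_Bs s b -> in_Bs s c ->
  exists l, infinite_sum (Bs_term s (fun n => c n - b n)) l.
Proof.
  intros [lb Hb] [lc Hc].
  destruct (infinite_sum_comparison (Bs_term s (fun n => c n - b n))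
              (fun n => Bs_term s c n + Bs_term s b n) (lc + lb)) as [l [Hl _]].
  - intros n. split; [apply Bs_term_nonneg|].
    pose proof (Rabs_triang (c n) (- b n)). rewrite Rabs_Ropp in H.
    destruct n; cbn [Bs_term]; unfold Rminus; [lra|].
    rewrite <- Rmult_plus_distr_l. apply Rmult_le_compat_l; [left; apply exp_pos|exact H].
  - apply infinite_sum_add; assumption.
  - exists l; exact Hl.
Qed.

Lemma BLog_sub s g h : in_BLog s g -> in_BLog s h ->
  exists l, infinite_sum (BLog_term s (fun n => h n - g n)) l.
Proof.
  intros [_ [lg Hg]] [_ [lh Hh]].
  destruct (infinite_sum_comparison (BLog_term s (fun n => h n - g n))
              (fun n => BLog_term s h n + BLog_term s g n) (lh + lg)) as [l [Hl _]].
  - intros n. split; [apply BLog_term_nonneg|].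
    destruct n; [simpl; lra|]. rewrite !BLog_term_S, <- Rmult_plus_distr_l.
    pose proof (Rabs_triang (h (S n)) (- g (S n))). rewrite Rabs_Ropp in H. unfold Rminus.
    apply Rmult_le_compat_l; [apply Rlt_le, BLog_weight_pos|exact H].
  - apply infinite_sum_add; assumption.
  - exists l; exact Hl.
Qed.

Lemma L_coef_in_BLog s Om b : 1 <= s -> in_Bs s b -> in_BLog (s - 1) (L_coef Om b).
Proof.
  intros Hs [l Hl]. split; [reflexivity|].
  destruct (L_coef_series Om s Hs) as [K [_ HL]].
  destruct (HL b l Hl) as [l' [Hl' _]]. exists l'; exact Hl'.
Qed.

Lemma L_coef_continuous s Om : 1 <= s ->
  forall b, in_Bs s b -> forall eps, 0 < eps ->
    exists delta, 0 < delta /\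
      forall c, in_Bs s c -> Bs_norm s (fun n => c n - b n) < delta ->
        BLog_norm (s - 1) (fun n => L_coef Om c n - L_coef Om b n) < eps.
Proof.
  intros Hs b Hb eps Heps. destruct (L_coef_series Om s Hs) as [K [HK HL]].
  exists (eps / (K + 1)). split; [apply Rdiv_lt_0_compat; lra|].
  intros c Hc Hn.
  destruct (Bs_sub s b c Hb Hc) as [ld Hld].
  unfold Bs_norm in Hn. rewrite (series_val_is _ _ Hld) in Hn.
  rewrite L_coef_sub. destruct (HL _ _ Hld) as [l' [Hl' Hle]].
  unfold BLog_norm. rewrite (series_val_is _ _ Hl').
  pose proof (infinite_sum_ge_term _ _ 0 (Bs_term_nonneg s _) Hld).
  pose proof (Bs_term_nonneg s (fun n => c n - b n) 0).
  apply Rle_lt_trans with (K * ld); [exact Hle|].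
  apply Rle_lt_trans with (K * (eps / (K + 1))); [apply Rmult_le_compat_l; lra|].
  apply Rmult_lt_reg_r with (K + 1); [lra|].
  unfold Rdiv. rewrite Rmult_assoc, Rmult_assoc, Rinv_l by lra. nra.
Qed.

Lemma in_Bs_single s (u : nat -> R) j : (forall n, n <> j -> u n = 0) -> in_Bs s u.
Proof.
  intros H. exists (Bs_term s u j). apply infinite_sum_single. intros n Hn.
  destruct n; simpl; rewrite H, Rabs_R0 by auto; ring.
Qed.

Lemma in_BLog_single s (u : nat -> R) j : u 0%nat = 0 -> (forall n, n <> j -> u n = 0) ->
  in_BLog s u.
Proof.
  intros H0 H. split; [exact H0|]. exists (BLog_term s u j). apply infinite_sum_single.
  intros [|n] Hn; [reflexivity|]. rewrite BLog_term_S, H, Rabs_R0 by auto. ring.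
Qed.

Lemma vm_in_Bs s m : in_Bs s (vm m).
Proof.
  apply (in_Bs_single s (vm m) (m - 1)). intros n Hn. unfold vm.
  rewrite (proj2 (Nat.eqb_neq _ _) Hn). reflexivity.
Qed.

Lemma Omega1_sub_neq0 m n : (2 <= m)%nat -> S n <> m -> Omega1 m - Omega1 (S n) <> 0.
Proof. intros Hm Hn E. apply Hn, Omega1_inj; lia || lra. Qed.

Lemma L_coef_Omega1_vm m n : (1 <= m)%nat -> L_coef (Omega1 m) (vm m) n = 0.
Proof.
  intros Hm. destruct n as [|n]; [reflexivity|]. rewrite L_coef_S. unfold vm.
  destruct (Nat.eqb_spec n (m - 1)); [replace (S n) with m by lia|]; field.
Qed.

Lemma L_kernel_nontrivial_iff s Om : Om <> 0 ->
  (exists b, in_Bs s b /\ (exists n, b n <> 0) /\ forall n, L_coef Om b n = 0)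
  <-> exists m : nat, (2 <= m)%nat /\ Om = Omega1 m.
Proof.
  intros HOm. split.
  - intros [b [_ [[n Hn] HL]]]. specialize (HL (S n)). rewrite L_coef_S in HL.
    assert (E : Om = Omega1 (S n)).
    { destruct (Req_dec Om (Omega1 (S n))) as [E|E]; auto. exfalso.
      pose proof (not_0_INR (S n) (Nat.neq_succ_0 n)).
      assert (INR (S n) * (Om - Omega1 (S n)) * b n <> 0)
        by (repeat apply Rmult_integral_contrapositive_currified; lra || auto).
      lra. }
    destruct n as [|n]; [rewrite Omega1_1 in E; contradiction|].
    exists (S (S n)). split; [lia|exact E].
  - intros [m [Hm ->]]. exists (vm m). split; [apply vm_in_Bs|]. split.
    + exists (m - 1)%nat. unfold vm. rewrite Nat.eqb_refl. lra.
    + intros n. apply L_coef_Omega1_vm. lia.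
Qed.

Lemma L_kernel_Omega1 m b : (2 <= m)%nat ->
  (forall n, L_coef (Omega1 m) b n = 0) <-> exists c : R, forall n, b n = c * vm m n.
Proof.
  intros Hm. split.
  - intros HL. exists (b (m - 1)%nat). intros n. unfold vm.
    destruct (Nat.eqb_spec n (m - 1)) as [->|E]; [ring|].
    rewrite Rmult_0_r. specialize (HL (S n)). rewrite L_coef_S in HL.
    pose proof (Omega1_sub_neq0 m n Hm ltac:(lia)). pose proof (not_0_INR (S n) (Nat.neq_succ_0 n)).
    destruct (Req_dec (b n) 0) as [Z|Z]; auto. exfalso.
    assert (INR (S n) * (Omega1 m - Omega1 (S n)) * b n <> 0)
      by (repeat apply Rmult_integral_contrapositive_currified; lra || auto).
    lra.
  - intros [c Hc] n. rewrite <- (Rmult_0_r c), <- (L_coef_Omega1_vm m n) by lia.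
    destruct n as [|n]; [simpl; ring|]. rewrite !L_coef_S, Hc. field.
Qed.

Lemma RangeL_vanish s m g : (1 <= m)%nat -> RangeL s m g -> g m = 0.
Proof.
  intros Hm [b [_ Hb]]. rewrite <- Hb. destruct m as [|m]; [lia|].
  rewrite L_coef_S. field.
Qed.

Lemma RangeL_in_BLog s m g : 1 <= s -> RangeL s m g -> in_BLog (s - 1) g.
Proof.
  intros Hs [b [Hb Hg]].
  replace g with (L_coef (Omega1 m) b) by (apply functional_extensionality; auto).
  apply L_coef_in_BLog; assumption.
Qed.

Definition L_preimage (m : nat) (g : nat -> R) (n : nat) : R :=
  if Nat.eqb n (m - 1) then 0 else 2 * g (S n) / (INR (S n) * (Omega1 m - Omega1 (S n))).

Lemma L_preimage_abs_le m g c k : (2 <= m)%nat -> 0 < c ->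
  (forall n, (1 <= n)%nat -> n <> m -> c * (1 + ln (INR n)) <= Rabs (Omega1 m - Omega1 n)) ->
  Rabs (L_preimage m g k) <= 2 / c * (Rabs (g (S k)) / (1 + ln (INR (S k)))) / INR (S k).
Proof.
  intros Hm Hc Hgap.
  pose proof (one_plus_ln_INR_pos (S k) ltac:(lia)) as Hl1.
  pose proof (INR_ge_1 (S k) ltac:(lia)) as HN. pose proof (Rabs_pos (g (S k))).
  unfold L_preimage. destruct (Nat.eqb_spec k (m - 1)) as [E|E].
  - rewrite Rabs_R0. repeat apply Rmult_le_pos; try lra;
      left; apply Rinv_0_lt_compat; lra.
  - specialize (Hgap (S k) ltac:(lia) ltac:(lia)).
    assert (Hd : 0 < Rabs (Omega1 m - Omega1 (S k))) by nra.
    unfold Rdiv. rewrite !Rabs_mult, Rabs_inv, Rabs_mult, (Rabs_right 2), (Rabs_right (INR (S k)))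
      by lra.
    replace (2 * Rabs (g (S k)) * / (INR (S k) * Rabs (Omega1 m - Omega1 (S k))))
      with (2 * Rabs (g (S k)) * / INR (S k) * / Rabs (Omega1 m - Omega1 (S k)))
      by (field; lra).
    replace (2 * / c * (Rabs (g (S k)) * / (1 + ln (INR (S k)))) * / INR (S k))
      with (2 * Rabs (g (S k)) * / INR (S k) * / (c * (1 + ln (INR (S k))))) by (field; lra).
    apply Rmult_le_compat_l; [apply Rmult_le_pos; [lra|left; apply Rinv_0_lt_compat; lra]|].
    apply Rinv_le_contravar; [apply Rmult_lt_0_compat; lra|exact Hgap].
Qed.

(* The gap [|Omega1 m - Omega1 n| >= c (1 + ln n)] recovers the weight lost by [L]. *)
Lemma L_preimage_in_Bs s m g : 1 <= s -> (2 <= m)%nat -> in_BLog (s - 1) g ->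
  in_Bs s (L_preimage m g).
Proof.
  intros Hs Hm [_ [l Hl]].
  destruct (Omega1_gap m Hm) as [c [Hc Hgap]].
  assert (Hcmp : forall k, 0 <= Bs_term s (L_preimage m g) k
                           <= 2 / c * BLog_term (s - 1) g (S k)).
  { intros k. split; [apply Bs_term_nonneg|].
    pose proof (one_plus_ln_INR_pos (S k) ltac:(lia)).
    pose proof (INR_ge_1 (S k) ltac:(lia)).
    pose proof (L_preimage_abs_le m g c k Hm Hc Hgap) as Hpk.
    rewrite BLog_term_S.
    destruct k as [|k]; cbn [Bs_term].
    - replace (INR 1) with 1 in * by reflexivity. rewrite Rpower_1_l.
      eapply Rle_trans; [exact Hpk|]. right. field. split; lra.
    - pose proof (Rpower_INR_le_S (S k) s ltac:(lia) ltac:(lra)).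
      pose proof (exp_pos (s * ln (INR (S k)))).
      apply Rle_trans with (Rpower (INR (S (S k))) s
                            * (2 / c * (Rabs (g (S (S k))) / (1 + ln (INR (S (S k)))))
                               / INR (S (S k)))).
      + apply Rmult_le_compat; [left; exact H2|apply Rabs_pos|exact H1|exact Hpk].
      + right. rewrite (Rpower_sub_1 (INR (S (S k))) s) by lra. field. split; lra. }
  destruct (infinite_sum_comparison _ _ _ Hcmp
              (infinite_sum_scal _ _ (2 / c) (infinite_sum_shift_left _ _ Hl)))
    as [l' [Hl' _]].
  exists l'; exact Hl'.
Qed.

Lemma RangeL_iff s m g : 1 <= s -> (2 <= m)%nat ->
  RangeL s m g <-> (in_BLog (s - 1) g /\ g m = 0).
Proof.
  intros Hs Hm. split.
  - intros H. split; [eapply RangeL_in_BLog; eauto|eapply RangeL_vanish; eauto; lia].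
  - intros [Hg Hgm]. exists (L_preimage m g). split; [apply L_preimage_in_Bs; auto|].
    intros [|n]; [simpl; symmetry; apply Hg|].
    rewrite L_coef_S. unfold L_preimage.
    destruct (Nat.eqb_spec n (m - 1)).
    + replace (S n) with m by lia. rewrite Hgm. field.
    + pose proof (Omega1_sub_neq0 m n Hm ltac:(lia)). pose proof (not_0_INR (S n) (Nat.neq_succ_0 n)). field. split; auto.
Qed.

Lemma RangeL_closed s m g : 1 <= s -> (2 <= m)%nat -> in_BLog (s - 1) g ->
  (forall eps, 0 < eps -> exists h, RangeL s m h /\ BLog_norm (s - 1) (fun n => h n - g n) < eps) ->
  RangeL s m g.
Proof.
  intros Hs Hm Hg Happ. apply (RangeL_iff s m g Hs Hm). split; [exact Hg|].
  destruct (Req_dec (g m) 0) as [Z|Hne]; [exact Z|exfalso].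
  destruct m as [|m']; [lia|].
  set (eps := BLog_term (s - 1) g (S m')).
  assert (Heps : 0 < eps)
    by (unfold eps; rewrite BLog_term_S; apply Rmult_lt_0_compat;
        [apply BLog_weight_pos|apply Rabs_pos_lt; auto]).
  destruct (Happ eps Heps) as [h [Hh Hn]].
  pose proof (RangeL_vanish s (S m') h ltac:(lia) Hh) as Hhm.
  destruct (BLog_sub (s - 1) g h Hg (RangeL_in_BLog s _ _ Hs Hh)) as [l Hl].
  unfold BLog_norm in Hn. rewrite (series_val_is _ _ Hl) in Hn.
  pose proof (infinite_sum_ge_term _ _ (S m') (BLog_term_nonneg (s - 1) _) Hl) as Hge.
  rewrite !BLog_term_S, Hhm, Rminus_0_l, Rabs_Ropp in Hge.
  unfold eps in Heps, Hn. rewrite BLog_term_S in Hn. lra.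
Qed.

Definition mode_indicator (m n : nat) : R := if Nat.eqb n m then 1 else 0.

Lemma mode_indicator_in_BLog s m : (1 <= m)%nat -> in_BLog s (mode_indicator m).
Proof.
  intros Hm. apply (in_BLog_single _ _ m); unfold mode_indicator.
  - destruct (Nat.eqb_spec 0 m); [lia|reflexivity].
  - intros n Hn. rewrite (proj2 (Nat.eqb_neq _ _) Hn). reflexivity.
Qed.

Lemma RangeL_codim1 s m : 1 <= s -> (2 <= m)%nat ->
  in_BLog (s - 1) (mode_indicator m) /\ ~ RangeL s m (mode_indicator m) /\
  forall g, in_BLog (s - 1) g -> exists c : R, RangeL s m (fun n => g n - c * mode_indicator m n).
Proof.
  intros Hs Hm.
  assert (He : in_BLog (s - 1) (mode_indicator m)) by (apply mode_indicator_in_BLog; lia).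
  split; [exact He|split].
  - intros H. pose proof (RangeL_vanish s m _ ltac:(lia) H).
    unfold mode_indicator in H0. rewrite Nat.eqb_refl in H0. lra.
  - intros g Hg. exists (g m). apply (RangeL_iff s m _ Hs Hm). split.
    + assert (Hce : in_BLog (s - 1) (fun n => g m * mode_indicator m n)).
      { destruct He as [He0 [l Hl]]. split; [cbv beta; rewrite He0; ring|].
        exists (Rabs (g m) * l).
        apply infinite_sum_ext with (fun n => Rabs (g m) * BLog_term (s - 1) (mode_indicator m) n).
        - intros [|n]; [simpl; ring|]. rewrite !BLog_term_S, Rabs_mult. ring.
        - apply infinite_sum_scal, Hl. }
      split.
      * destruct Hg as [Hg0 _], Hce as [Hc0 _]. cbv beta in *. rewrite Hg0, Hc0. ring.
      * apply (BLog_sub (s - 1) _ _ Hce Hg).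
    + unfold mode_indicator. rewrite Nat.eqb_refl. ring.
Qed.

Lemma BLog_norm_zero s : BLog_norm s (fun _ => 0) = 0.
Proof.
  unfold BLog_norm. apply series_val_is.
  apply (infinite_sum_ext (fun _ => 0)); [|exact infinite_sum_zero].
  intros [|n]; [reflexivity|]. rewrite BLog_term_S, Rabs_R0. ring.
Qed.

Lemma L_coef_vm_diff_quotient m Om n : (1 <= m)%nat -> Om <> Omega1 m ->
  (L_coef Om (vm m) n - L_coef (Omega1 m) (vm m) n) / (Om - Omega1 m)
  = INR m / 2 * mode_indicator m n.
Proof.
  intros Hm HOm. assert (Hx : Om - Omega1 m <> 0) by lra.
  unfold mode_indicator. destruct n as [|k].
  - destruct (Nat.eqb_spec 0 m); [lia|]. simpl. field. exact Hx.
  - rewrite !L_coef_S. unfold vm.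
    destruct (Nat.eqb_spec k (m - 1)), (Nat.eqb_spec (S k) m); try lia.
    + replace (S k) with m by lia. field. exact Hx.
    + field. exact Hx.
Qed.

Lemma tp_eval_vm m th : (1 <= m)%nat ->
  tp_eval (m - 1) (vm m) (Cexpi th) = Cexpi (- (INR (m - 1) * th)).
Proof.
  intros Hm. unfold tp_eval. rewrite Csum_single.
  - unfold vm. rewrite Nat.eqb_refl, Cpow_conj_expi. apply C_ext; simpl; ring.
  - intros n Hn. unfold vm. rewrite (proj2 (Nat.eqb_neq n (m - 1))) by lia.
    apply C_ext; simpl; ring.
Qed.

Lemma tp_deriv_vm m th : (1 <= m)%nat ->
  tp_deriv (m - 1) (vm m) (Cexpi th) = Cscal (- INR (m - 1)) (Cexpi (- (INR m * th))).
Proof.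
  intros Hm. unfold tp_deriv. rewrite Csum_single.
  - unfold vm. rewrite Nat.eqb_refl, Cpow_conj_expi. replace (S (m - 1)) with m by lia.
    apply C_ext; simpl; ring.
  - intros n Hn. unfold vm. rewrite (proj2 (Nat.eqb_neq n (m - 1))) by lia.
    apply C_ext; simpl; ring.
Qed.

Lemma transversal_series m th : (1 <= m)%nat ->
  let w := Cexpi th in
  Cseries_to (fun n => Cscal (INR m / 2 * mode_indicator m n)
                             (Cmul Ci (Csub (Cpow w n) (Cpow (Cconj w) n))))
    (CR (Cim (Cadd (Cconj (tp_deriv (m - 1) (vm m) w))
                   (Cmul (Cconj w) (tp_eval (m - 1) (vm m) w))))).
Proof.
  intros Hm w. unfold w. rewrite tp_deriv_vm, tp_eval_vm by exact Hm.
  assert (Hm1 : INR (m - 1) = INR m - 1) by (rewrite minus_INR by lia; reflexivity).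
  set (T := fun n => Cscal (INR m / 2 * mode_indicator m n)
                           (Cmul Ci (Csub (Cpow (Cexpi th) n) (Cpow (Cconj (Cexpi th)) n)))).
  assert (HT0 : forall n, n <> m -> T n = CR 0).
  { intros n Hn. unfold T, mode_indicator. rewrite (proj2 (Nat.eqb_neq _ _) Hn).
    apply C_ext; simpl; ring. }
  split.
  - replace (Cre (CR _)) with (Cre (T m)).
    + apply (infinite_sum_single (fun n => Cre (T n)) m). intros n Hn; rewrite HT0; auto.
    + unfold T, mode_indicator. rewrite Nat.eqb_refl, Cpow_expi, Cpow_conj_expi, Cconj_expi.
      cbn [Cim Cre CR Cadd Cmul Cconj Cscal Csub Copp Ci Cexpi].
      rewrite Hm1, !sin_neg, !cos_neg.
      replace (INR m * th) with (th + (INR m - 1) * th) by ring. rewrite sin_plus. field.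
  - replace (Cim (CR _)) with (Cim (T m)).
    + apply (infinite_sum_single (fun n => Cim (T n)) m). intros n Hn; rewrite HT0; auto.
    + unfold T, mode_indicator. rewrite Nat.eqb_refl, Cpow_expi, Cpow_conj_expi.
      cbn [Cim Cre CR Cmul Cscal Csub Cadd Copp Ci Cexpi]. rewrite cos_neg. ring.
Qed.

Lemma L_transversality s m : 1 <= s -> (2 <= m)%nat ->
  let D := fun n => INR m / 2 * mode_indicator m n in
  in_BLog (s - 1) D
  /\ (forall eps, 0 < eps -> exists delta, 0 < delta /\
        forall Om, Om <> Omega1 m -> Rabs (Om - Omega1 m) < delta ->
          BLog_norm (s - 1)
            (fun n => (L_coef Om (vm m) n - L_coef (Omega1 m) (vm m) n) / (Om - Omega1 m)
                      - D n) < eps)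
  /\ ~ RangeL s m D.
Proof.
  intros Hs Hm D. split; [|split].
  - apply (in_BLog_single _ D m); unfold D, mode_indicator.
    + destruct (Nat.eqb_spec 0 m); [lia|ring].
    + intros n Hn. rewrite (proj2 (Nat.eqb_neq _ _) Hn). ring.
  - intros eps Heps. exists 1. split; [lra|]. intros Om HOm _.
    replace (fun n => _ - D n) with (fun _ : nat => 0); [rewrite BLog_norm_zero; exact Heps|].
    apply functional_extensionality. intros n.
    rewrite L_coef_vm_diff_quotient by (lia || exact HOm). unfold D. ring.
  - intros H. pose proof (RangeL_vanish s m D ltac:(lia) H) as H0.
    unfold D, mode_indicator in H0. rewrite Nat.eqb_refl in H0.
    pose proof (INR_ge_1 m ltac:(lia)). lra.
Qed.

Theorem proposition10p2 (s : R) (hs : 1 <= s) :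
  (* derivative formula for trigonometric polynomials h = sum_{n<=N} b_n wbar^n *)
  (forall (Om : R) (N : nat) (b : nat -> R) (th : R),
      derivable_pt_lim (fun t => F1 Om N (fun n => t * b n) th) 0
                       (Cre (Lformula Om N b (Cexpi th)))
      /\ Cim (Lformula Om N b (Cexpi th)) = 0)
  /\
  (* (1) continuity B^s -> B^{s-1}_Log *)
  (forall Om : R,
      (forall b, in_Bs s b -> in_BLog (s - 1) (L_coef Om b))
      /\ (forall b, in_Bs s b -> forall eps, 0 < eps ->
            exists delta, 0 < delta /\
              forall c, in_Bs s c -> Bs_norm s (fun n => c n - b n) < delta ->
                BLog_norm (s - 1) (fun n => L_coef Om c n - L_coef Om b n) < eps))
  /\
  (* (2) kernel *)
  (forall Om : R, Om <> 0 ->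
      ((exists b, in_Bs s b /\ (exists n, b n <> 0) /\ forall n, L_coef Om b n = 0)
       <-> exists m : nat, (2 <= m)%nat /\ Om = Omega1 m))
  /\
  (forall m : nat, (2 <= m)%nat ->
      in_Bs s (vm m)
      /\ forall b, in_Bs s b ->
           ((forall n, L_coef (Omega1 m) b n = 0) <-> exists c : R, forall n, b n = c * vm m n))
  /\
  (* (3) range *)
  (forall m : nat, (2 <= m)%nat ->
      (forall g, RangeL s m g <-> (in_BLog (s - 1) g /\ g m = 0))
      /\ (forall g, in_BLog (s - 1) g ->
            (forall eps, 0 < eps -> exists h, RangeL s m h /\
                BLog_norm (s - 1) (fun n => h n - g n) < eps) ->
            RangeL s m g)
      /\ (exists e, in_BLog (s - 1) e /\ ~ RangeL s m e /\
            forall g, in_BLog (s - 1) g -> exists c : R, RangeL s m (fun n => g n - c * e n)))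
  /\
  (* (4) transversality *)
  (forall m : nat, (2 <= m)%nat ->
      exists D : nat -> R,
        in_BLog (s - 1) D
        /\ (forall eps, 0 < eps -> exists delta, 0 < delta /\
              forall Om, Om <> Omega1 m -> Rabs (Om - Omega1 m) < delta ->
                BLog_norm (s - 1)
                  (fun n => (L_coef Om (vm m) n - L_coef (Omega1 m) (vm m) n) / (Om - Omega1 m)
                            - D n) < eps)
        /\ (forall th : R,
              let w := Cexpi th in
              Cseries_to (fun n => Cscal (D n) (Cmul Ci (Csub (Cpow w n) (Cpow (Cconj w) n))))
                (CR (Cim (Cadd (Cconj (tp_deriv (m - 1) (vm m) w))
                               (Cmul (Cconj w) (tp_eval (m - 1) (vm m) w))))))
        /\ ~ RangeL s m D).
Proof.
  split; [intros Om N b th; split|split; [|split; [|split; [|split]]]].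
  - rewrite <- Cim_F1_derivative. apply F1_derivable_pt_lim.
  - apply Cim_Lformula.
  - intros Om. split; [intros; apply L_coef_in_BLog; auto|apply L_coef_continuous, hs].
  - intros Om HOm. apply L_kernel_nontrivial_iff, HOm.
  - intros m Hm. split; [apply vm_in_Bs|intros b _; apply L_kernel_Omega1, Hm].
  - intros m Hm. split; [|split].
    + intros g. apply RangeL_iff; auto.
    + intros g. apply RangeL_closed; auto.
    + exists (mode_indicator m). apply RangeL_codim1; auto.
  - intros m Hm. destruct (L_transversality s m hs Hm) as [HD [Hq Hn]].
    eexists. split; [exact HD|split; [exact Hq|split; [|exact Hn]]].
    intros th. apply transversal_series. lia.
Qed.
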